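(* Let $K$ be an origin-symmetric convex body in $\mathbb{R}^2$ and let $\mu$ be a B-measure on $\partial K$. Then $\operatorname{supp}(\mu)\subseteq A(K)\setminus E(K)$.
   Context: For an origin-symmetric convex body $K\subset\mathbb{R}^2$ (compact convex set with non-empty interior, $K=-K$), let $\|x\|_K=\min\{\lambda>0: x\in\lambda K\}$ be the associated norm. For non-zero $x,y\in\mathbb{R}^2$, $x$ is Birkhoff orthogonal to $y$, written $x\dashv y$, if $\|x\|_K\le\|x+ty\|_K$ for all $t\in\mathbb{R}$. An angular measure on $\partial K$ is a Borel measure $\mu$ on $\partial K$ with $\mu(\partial K)=2\pi$, $\mu(X)=\mu(-X)$ for every Borel $X\subseteq\partial K$, and $\mu(\{x\})=0$ for every $x\in\partial K$. A B-measure is an angular measure $\mu$ such that $\mu(C)=\pi/2$ for every closed arc $C$ of $\partial K$ that contains no pair of opposite points $z,-z$ and whose endpoints $x,y$ satisfy $x\dashv y$. A point $x\in\partial K$ is an Auerbach point if there is $y\in\partial K$ with $x\dashv y$ and $y\dashv x$; $A(K)$ denotes the set of Auerbach points. $E(K)$ denotes the union of all relatively open non-degenerate line segments contained in $\partial K$. The support $\operatorname{supp}(\mu)$ is the set of all $x\in\partial K$ such that every relatively open subset of $\partial K$ containing $x$ has positive $\mu$-measure. *)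

From Stdlib Require Import Reals.
Open Scope R_scope.

Definition pt := (R * R)%type.
Definition pset := pt -> Prop.

Definition padd (x y : pt) : pt := (fst x + fst y, snd x + snd y).
Definition pscale (l : R) (x : pt) : pt := (l * fst x, l * snd x).
Definition popp (x : pt) : pt := (- fst x, - snd x).
Definition pzero : pt := (0, 0).

Definition pdist (x y : pt) : R :=
  sqrt ((fst x - fst y)^2 + (snd x - snd y)^2).

Definition is_open (O : pset) : Prop :=
  forall z, O z -> exists r, 0 < r /\ forall w, pdist w z < r -> O w.
Definition is_closed (A : pset) : Prop := is_open (fun z => ~ A z).
Definition is_bounded (A : pset) : Prop :=
  exists M, forall z, A z -> pdist z pzero <= M.
Definition interior (A : pset) (x : pt) : Prop :=
  exists r, 0 < r /\ forall w, pdist w x < r -> A w.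
Definition closure (A : pset) (x : pt) : Prop :=
  forall r, 0 < r -> exists w, A w /\ pdist w x < r.
Definition boundary (A : pset) (x : pt) : Prop := closure A x /\ ~ interior A x.

Definition convex (A : pset) : Prop :=
  forall x y s, A x -> A y -> 0 <= s <= 1 ->
    A (padd (pscale (1 - s) x) (pscale s y)).

Definition sym_convex_body (K : pset) : Prop :=
  is_closed K /\ is_bounded K /\ convex K /\ (exists x, interior K x) /\
  (forall x, K x -> K (popp x)).

Definition is_glb (E : R -> Prop) (m : R) : Prop :=
  (forall l, E l -> m <= l) /\ (forall b, (forall l, E l -> b <= l) -> b <= m).
Definition gauge (K : pset) (x : pt) (r : R) : Prop :=
  is_glb (fun l => 0 < l /\ exists y, K y /\ x = pscale l y) r.

Definition birkhoff (K : pset) (x y : pt) : Prop :=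
  x <> pzero /\ y <> pzero /\
  forall t r s, gauge K x r -> gauge K (padd x (pscale t y)) s -> r <= s.

Inductive borel : pset -> Prop :=
| borel_open O : is_open O -> borel O
| borel_compl A : borel A -> borel (fun z => ~ A z)
| borel_union (A : nat -> pset) : (forall n, borel (A n)) ->
    borel (fun z => exists n, A n z)
| borel_ext A B : borel A -> (forall z, A z <-> B z) -> borel B.

(* Borel subsets of S (trace sigma-algebra, S closed) *)
Definition borel_in (S X : pset) : Prop := borel X /\ forall z, X z -> S z.

Definition finite_borel_measure_on (S : pset) (mu : pset -> R) : Prop :=
  (forall X, borel_in S X -> 0 <= mu X) /\
  mu (fun _ => False) = 0 /\
  (forall A : nat -> pset, (forall n, borel_in S (A n)) ->
     (forall n m z, n <> m -> A n z -> A m z -> False) ->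
     infinite_sum (fun n => mu (A n)) (mu (fun z => exists n, A n z))).

Definition angular_measure (K : pset) (mu : pset -> R) : Prop :=
  finite_borel_measure_on (boundary K) mu /\
  mu (boundary K) = 2 * PI /\
  (forall X, borel_in (boundary K) X -> mu X = mu (fun z => X (popp z))) /\
  (forall x, boundary K x -> mu (fun z => z = x) = 0).

Definition arc_param (S : pset) (g : R -> pt) (x y : pt) : Prop :=
  (forall t, 0 <= t <= 1 -> S (g t)) /\
  (forall t s, 0 <= t <= 1 -> 0 <= s <= 1 -> g t = g s -> t = s) /\
  (forall t, 0 <= t <= 1 -> forall eps, 0 < eps -> exists delta, 0 < delta /\
     forall s, 0 <= s <= 1 -> Rabs (s - t) < delta -> pdist (g s) (g t) < eps) /\
  g 0 = x /\ g 1 = y.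
Definition arc_set (g : R -> pt) : pset :=
  fun z => exists t, 0 <= t <= 1 /\ z = g t.

Definition B_measure (K : pset) (mu : pset -> R) : Prop :=
  angular_measure K mu /\
  forall g x y, arc_param (boundary K) g x y ->
    (forall z, arc_set g z -> ~ arc_set g (popp z)) ->
    birkhoff K x y ->
    mu (arc_set g) = PI / 2.

Definition auerbach (K : pset) (x : pt) : Prop :=
  boundary K x /\ exists y, boundary K y /\ birkhoff K x y /\ birkhoff K y x.

Definition E_set (K : pset) (x : pt) : Prop :=
  exists a b, a <> b /\
    (forall s, 0 < s < 1 -> boundary K (padd (pscale (1 - s) a) (pscale s b))) /\
    exists s, 0 < s < 1 /\ x = padd (pscale (1 - s) a) (pscale s b).

Definition support (K : pset) (mu : pset -> R) (x : pt) : Prop :=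
  boundary K x /\
  forall O, is_open O -> O x -> 0 < mu (fun z => O z /\ boundary K z).

(* A B-measure gives measure [PI / 2] to every arc whose endpoints are Birkhoff orthogonal, and
   measure [PI] to each closed half of the boundary cut out by a line through the origin.

   If [x] lies inside a boundary segment of direction [d], every point of the segment is Birkhoff
   orthogonal to [d]; the arcs to (the normalised) [d] from two points of the segment on either
   side of [x] both have measure [PI / 2], so the arc between them is a null neighbourhood of [x].

   If [x] is not an Auerbach point, take two Birkhoff steps [x -| y -| w]; then [w <> -x], and
   the two arcs [x, y] and [y, w] of measure [PI / 2] force a null arc ending at [x] on the side of
   [x] determined by the position of [w]. Two such steps ending on different sides give a null
   neighbourhood of [x]. If they all end on the same side, apply the argument to points approaching
   [x] from the other side: by compactness their null arcs eventually reach over [x]. *)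

From Stdlib Require Import Reals Lra Lia.
From Stdlib Require Import Classical ClassicalEpsilon FunctionalExtensionality PropExtensionality.
Open Scope R_scope.

Lemma pt_eq (a b : pt) : fst a = fst b -> snd a = snd b -> a = b.
Proof. destruct a, b; simpl; intros; subst; reflexivity. Qed.

Ltac pt_ext := apply pt_eq; unfold padd, pscale, popp, pzero; cbn [fst snd].

Lemma le_of_forall_gt (a b : R) : (forall l, a < l -> b <= l) -> b <= a.
Proof.
  intros H. destruct (Rle_or_lt b a) as [|Hlt]; auto.
  specialize (H ((a + b) / 2) ltac:(lra)). lra.
Qed.

Lemma Rdiv_nonneg a b : 0 <= a -> 0 < b -> 0 <= a / b.
Proof. intros. apply Rmult_le_pos; auto. left; apply Rinv_0_lt_compat; auto. Qed.

Lemma Rabs_fst_le_pdist a b : Rabs (fst a - fst b) <= pdist a b.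
Proof.
  unfold pdist. rewrite <- sqrt_Rsqr_abs. apply sqrt_le_1_alt.
  unfold Rsqr. set (u := fst a - fst b). set (v := snd a - snd b). nra.
Qed.

Lemma Rabs_snd_le_pdist a b : Rabs (snd a - snd b) <= pdist a b.
Proof.
  unfold pdist. rewrite <- sqrt_Rsqr_abs. apply sqrt_le_1_alt.
  unfold Rsqr. set (u := fst a - fst b). set (v := snd a - snd b). nra.
Qed.

Lemma pdist_le_l1 a b : pdist a b <= Rabs (fst a - fst b) + Rabs (snd a - snd b).
Proof.
  unfold pdist. set (u := fst a - fst b). set (v := snd a - snd b).
  pose proof (Rabs_pos u); pose proof (Rabs_pos v).
  rewrite <- (sqrt_square (Rabs u + Rabs v)) by lra.
  apply sqrt_le_1_alt.
  assert (Rabs u * Rabs u = u ^ 2) by (rewrite <- Rabs_mult, Rabs_right; [ring|nra]).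
  assert (Rabs v * Rabs v = v ^ 2) by (rewrite <- Rabs_mult, Rabs_right; [ring|nra]).
  nra.
Qed.

Lemma pdist_refl a : pdist a a = 0.
Proof.
  apply Rle_antisym; [|apply sqrt_pos].
  eapply Rle_trans; [apply pdist_le_l1|]. rewrite !Rminus_diag, Rabs_R0. lra.
Qed.

Lemma popp_involutive x : popp (popp x) = x.
Proof. pt_ext; ring. Qed.

Definition det (u v : pt) : R := fst u * snd v - snd u * fst v.

Lemma det_swap u v : det v u = - det u v.
Proof. unfold det; ring. Qed.

Lemma det_oppl u v : det (popp u) v = - det u v.
Proof. unfold det, popp; simpl; ring. Qed.

Lemma det_oppr u v : det u (popp v) = - det u v.
Proof. unfold det, popp; simpl; ring. Qed.

Lemma det_cramer u v z : pscale (det u v) z = padd (pscale (det z v) u) (pscale (det u z) v).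
Proof. pt_ext; unfold det; ring. Qed.

Lemma det_expand p u v z : det u v * det p z = det z v * det p u + det u z * det p v.
Proof. unfold det; ring. Qed.

Lemma det_eq0_scale u v : u <> pzero -> det u v = 0 -> exists l, v = pscale l u.
Proof.
  destruct u as [u1 u2], v as [v1 v2]. unfold det; simpl. intros Hu Hd.
  destruct (Req_dec u1 0) as [->|Hu1].
  - assert (Hu2 : u2 <> 0) by (intros ->; apply Hu; reflexivity).
    assert (Hv1 : v1 = 0).
    { assert (Hq : u2 * v1 = 0) by lra. apply Rmult_integral in Hq as [|]; [contradiction|auto]. }
    exists (v2 / u2). pt_ext; [subst; ring|field; auto].
  - exists (v1 / u1). pt_ext; [field; auto|].
    apply Rmult_eq_reg_l with u1; auto. field_simplify; auto. nra.
Qed.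

Definition segpt (u v : pt) (t : R) : pt := padd (pscale (1 - t) u) (pscale t v).

Lemma det_segpt_l u v t : det u (segpt u v t) = t * det u v.
Proof. unfold det, segpt, padd, pscale; simpl; ring. Qed.

Lemma det_segpt_r u v t : det (segpt u v t) v = (1 - t) * det u v.
Proof. unfold det, segpt, padd, pscale; simpl; ring. Qed.

Lemma det_segpt u v s t : det (segpt u v s) (segpt u v t) = (t - s) * det u v.
Proof. unfold det, segpt, padd, pscale; simpl; ring. Qed.

Lemma det_segpt_dir u v t : det (segpt u v t) (padd v (popp u)) = det u v.
Proof. unfold det, segpt, padd, pscale, popp; simpl; ring. Qed.

Lemma segment_dir_neq0 u v : u <> v -> padd v (popp u) <> pzero.
Proof.
  intros Huv E. apply Huv. pose proof (f_equal fst E) as E1. pose proof (f_equal snd E) as E2.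
  unfold padd, popp, pzero in E1, E2; simpl in E1, E2. pt_ext; lra.
Qed.

Lemma det_scaler u v c : det u (pscale c v) = c * det u v.
Proof. unfold det, pscale; simpl; ring. Qed.

Lemma segpt_neq0 u v t : 0 <= t <= 1 -> 0 < det u v -> segpt u v t <> pzero.
Proof.
  intros Ht Hd E. pose proof (det_segpt_l u v t) as H1. pose proof (det_segpt_r u v t) as H2.
  rewrite E in H1, H2. set (D := det u v) in *.
  unfold det, pzero in H1, H2; simpl in H1, H2. nra.
Qed.

Lemma set_ext (A B : pset) : (forall z, A z <-> B z) -> A = B.
Proof.
  intros H. apply functional_extensionality. intros z. apply propositional_extensionality, H.
Qed.

Definition lipschitz (f : pt -> R) : Prop := exists C, 0 <= C /\ forall w z,
  Rabs (f w - f z) <= C * (Rabs (fst w - fst z) + Rabs (snd w - snd z)).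

Lemma open_pos f : lipschitz f -> is_open (fun z => 0 < f z).
Proof.
  intros (C & HC & H) z Hz. exists (f z / (2 * (C + 1))). split.
  - apply Rdiv_lt_0_compat; lra.
  - intros w Hw. pose proof (Rabs_fst_le_pdist w z). pose proof (Rabs_snd_le_pdist w z).
    specialize (H z w). pose proof (Rle_abs (f z - f w)).
    rewrite (Rabs_minus_sym (fst z)), (Rabs_minus_sym (snd z)) in H.
    assert (f z / (2 * (C + 1)) * (2 * (C + 1)) = f z) by (field; lra).
    nra.
Qed.

Lemma lipschitz_opp f : lipschitz f -> lipschitz (fun z => - f z).
Proof.
  intros (C & HC & H). exists C. split; auto. intros w z.
  replace (- f w - - f z) with (- (f w - f z)) by ring. rewrite Rabs_Ropp. auto.
Qed.

Lemma lipschitz_detl a : lipschitz (det a).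
Proof.
  exists (Rabs (fst a) + Rabs (snd a)). split.
  - pose proof (Rabs_pos (fst a)); pose proof (Rabs_pos (snd a)); lra.
  - intros w z. unfold det.
    replace (fst a * snd w - snd a * fst w - (fst a * snd z - snd a * fst z))
      with (fst a * (snd w - snd z) - snd a * (fst w - fst z)) by ring.
    eapply Rle_trans; [apply Rabs_triang|]. rewrite Rabs_Ropp, !Rabs_mult.
    pose proof (Rabs_pos (fst a)); pose proof (Rabs_pos (snd a)).
    pose proof (Rabs_pos (fst w - fst z)); pose proof (Rabs_pos (snd w - snd z)). nra.
Qed.

Lemma lipschitz_detr a : lipschitz (fun z => det z a).
Proof.
  destruct (lipschitz_opp _ (lipschitz_detl a)) as (C & HC & H). exists C. split; auto.
  intros w z. rewrite (det_swap a w), (det_swap a z). apply H.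
Qed.

Lemma open_neg f : lipschitz f -> is_open (fun z => f z < 0).
Proof.
  intros H. rewrite (set_ext _ (fun z => 0 < - f z)) by (intros; lra).
  apply open_pos, lipschitz_opp, H.
Qed.

Lemma closed_nonneg f : lipschitz f -> is_closed (fun z => 0 <= f z).
Proof.
  intros H. unfold is_closed. rewrite (set_ext _ (fun z => f z < 0)) by (intros; lra).
  apply open_neg, H.
Qed.

Lemma open_inter (A B : pset) : is_open A -> is_open B -> is_open (fun z => A z /\ B z).
Proof.
  intros HA HB z [Az Bz].
  destruct (HA z Az) as (r1 & Hr1 & H1). destruct (HB z Bz) as (r2 & Hr2 & H2).
  exists (Rmin r1 r2). split; [apply Rmin_pos; auto|]. intros w Hw.
  pose proof (Rmin_l r1 r2); pose proof (Rmin_r r1 r2). split; [apply H1|apply H2]; lra.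
Qed.

Definition cone (a b : pt) : pset := fun z => 0 < det a z /\ 0 < det z b.

Lemma open_cone a b : is_open (cone a b).
Proof. apply open_inter; apply open_pos; [apply lipschitz_detl|apply lipschitz_detr]. Qed.

Lemma closed_singleton x : is_closed (fun z => z = x).
Proof.
  intros z Hz.
  destruct (Req_dec (fst z) (fst x)) as [E1|E1]; [destruct (Req_dec (snd z) (snd x)) as [E2|E2]|].
  - exfalso. apply Hz, pt_eq; auto.
  - exists (Rabs (snd z - snd x)). split; [apply Rabs_pos_lt; lra|].
    intros w Hw ->. pose proof (Rabs_snd_le_pdist x z). rewrite Rabs_minus_sym in H. lra.
  - exists (Rabs (fst z - fst x)). split; [apply Rabs_pos_lt; lra|].
    intros w Hw ->. pose proof (Rabs_fst_le_pdist x z). rewrite Rabs_minus_sym in H. lra.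
Qed.

Lemma borel_closed A : is_closed A -> borel A.
Proof.
  intros H. apply (borel_ext (fun z => ~ ~ A z)).
  - apply borel_compl, borel_open, H.
  - intros z; split; [apply NNPP|auto].
Qed.

Lemma borel_empty : borel (fun _ => False).
Proof. apply borel_open. intros z []. Qed.

Lemma borel_union2 A B : borel A -> borel B -> borel (fun z => A z \/ B z).
Proof.
  intros HA HB. apply (borel_ext (fun z => exists n, (match n with O => A | _ => B end) z)).
  - apply borel_union. intros [|n]; auto.
  - intros z. split.
    + intros ([|n] & H); auto.
    + intros [H|H]; [exists O|exists (S O)]; auto.
Qed.

Lemma borel_inter A B : borel A -> borel B -> borel (fun z => A z /\ B z).
Proof.
  intros HA HB. apply (borel_ext (fun z => ~ (~ A z \/ ~ B z))).
  - apply borel_compl, borel_union2; apply borel_compl; auto.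
  - intros z. split.
    + intros H. split; apply NNPP; intros H'; apply H; auto.
    + intros [H1 H2] [H|H]; auto.
Qed.

Lemma borel_detl_nonneg a : borel (fun z => 0 <= det a z).
Proof. apply borel_closed, closed_nonneg, lipschitz_detl. Qed.

Lemma borel_detr_nonneg a : borel (fun z => 0 <= det z a).
Proof. apply borel_closed, closed_nonneg, lipschitz_detr. Qed.

Lemma borel_detl_pos a : borel (fun z => 0 < det a z).
Proof. apply borel_open, open_pos, lipschitz_detl. Qed.

Lemma borel_detl_neg a : borel (fun z => det a z < 0).
Proof. apply borel_open, open_neg, lipschitz_detl. Qed.

Lemma borel_singleton x : borel (fun z => z = x).
Proof. apply borel_closed, closed_singleton. Qed.

Definition pconv (p : nat -> pt) (q : pt) : Prop :=
  Un_cv (fun n => fst (p n)) (fst q) /\ Un_cv (fun n => snd (p n)) (snd q).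

Definition subseq (phi : nat -> nat) : Prop := forall n, (n <= phi n)%nat.

Lemma Un_cv_subseq (u : nat -> R) l phi : subseq phi -> Un_cv u l -> Un_cv (fun n => u (phi n)) l.
Proof.
  intros Hp H eps He. destruct (H eps He) as (N & HN). exists N. intros n Hn.
  apply HN. specialize (Hp n). lia.
Qed.

Lemma pconv_subseq p q phi : subseq phi -> pconv p q -> pconv (fun n => p (phi n)) q.
Proof.
  intros Hp [H1 H2].
  split; [apply (Un_cv_subseq (fun n => fst (p n)))|apply (Un_cv_subseq (fun n => snd (p n)))];
    auto.
Qed.

Lemma subseq_comp phi psi : subseq phi -> subseq psi -> subseq (fun n => phi (psi n)).
Proof. intros H1 H2 n. specialize (H2 n). specialize (H1 (psi n)). lia. Qed.

Lemma bounded_cv_subseq (u : nat -> R) M : (forall n, Rabs (u n) <= M) ->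
  exists phi l, subseq phi /\ Un_cv (fun n => u (phi n)) l.
Proof.
  intros H.
  destruct (Bolzano_Weierstrass u (fun c => -M <= c <= M) (compact_P3 (-M) M)) as (l & Hl).
  { intros n. specialize (H n). unfold Rabs in H. destruct (Rcase_abs (u n)); lra. }
  assert (Hn : forall n, exists p, (n <= p)%nat /\ Rabs (u p - l) < / (INR n + 1)).
  { intros n.
    assert (Hpos : 0 < / (INR n + 1)) by (apply Rinv_0_lt_compat; pose proof (pos_INR n); lra).
    destruct (Hl (disc l (mkposreal _ Hpos)) n) as (p & Hp1 & Hp2).
    - exists (mkposreal _ Hpos). intros y Hy. auto.
    - exists p. split; auto. }
  destruct (choice _ Hn) as (phi & Hphi). exists phi, l. split; [intros n; apply Hphi|].
  intros eps He. destruct (archimed_cor1 eps He) as (N & HN1 & HN2). exists N. intros n Hn'.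
  unfold Rdist. destruct (Hphi n) as [_ Hp].
  assert (/ (INR n + 1) <= / INR N).
  { apply Rinv_le_contravar; [apply lt_0_INR; lia|]. apply le_INR in Hn'. lra. }
  lra.
Qed.

Lemma bounded_pconv_subseq (p : nat -> pt) M :
  (forall n, Rabs (fst (p n)) <= M /\ Rabs (snd (p n)) <= M) ->
  exists phi q, subseq phi /\ pconv (fun n => p (phi n)) q.
Proof.
  intros H.
  destruct (bounded_cv_subseq (fun n => fst (p n)) M) as (phi1 & l1 & Hp1 & Hc1);
    [intros n; apply H|].
  destruct (bounded_cv_subseq (fun n => snd (p (phi1 n))) M) as (phi2 & l2 & Hp2 & Hc2);
    [intros n; apply H|].
  exists (fun n => phi1 (phi2 n)), (l1, l2). split; [apply subseq_comp; auto|].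
  split; simpl; auto. apply (Un_cv_subseq (fun n => fst (p (phi1 n))) l1 phi2 Hp2 Hc1).
Qed.

Lemma Un_cv_ge (u : nat -> R) l c : Un_cv u l -> (forall n, c <= u n) -> c <= l.
Proof.
  intros H Hc. destruct (Rle_or_lt c l) as [|Hlt]; auto. exfalso.
  destruct (H (c - l) ltac:(lra)) as (N & HN). specialize (HN N (le_n N)). specialize (Hc N).
  unfold Rdist in HN. apply Rabs_def2 in HN. lra.
Qed.

Lemma Un_cv_le (u : nat -> R) l c : Un_cv u l -> (forall n, u n <= c) -> l <= c.
Proof.
  intros H Hc. apply Ropp_le_cancel, (Un_cv_ge (fun n => - u n)); [apply CV_opp, H|].
  intros n. specialize (Hc n). lra.
Qed.

Lemma Un_cv_const c : Un_cv (fun _ => c) c.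
Proof. intros eps He. exists O. intros n _. unfold Rdist. rewrite Rminus_diag, Rabs_R0. auto. Qed.

Lemma pconv_const q : pconv (fun _ => q) q.
Proof. split; apply Un_cv_const. Qed.

Lemma pconv_add_scale a b A B t : pconv a A -> pconv b B ->
  pconv (fun n => padd (a n) (pscale t (b n))) (padd A (pscale t B)).
Proof.
  intros [A1 A2] [B1 B2]. split; simpl; apply CV_plus; auto; apply CV_mult; auto; apply Un_cv_const.
Qed.

Lemma pconv_det a b A B : pconv a A -> pconv b B -> Un_cv (fun n => det (a n) (b n)) (det A B).
Proof. intros [A1 A2] [B1 B2]. unfold det. apply CV_minus; apply CV_mult; auto. Qed.

Lemma pconv_of_pdist (z : nat -> pt) x :
  (forall eps, 0 < eps -> exists N, forall n, (n >= N)%nat -> pdist (z n) x < eps) -> pconv z x.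
Proof.
  intros H. split; intros eps He; destruct (H eps He) as (N & HN); exists N; intros n Hn;
    unfold Rdist; eapply Rle_lt_trans;
    [apply Rabs_fst_le_pdist| |apply Rabs_snd_le_pdist|]; eauto.
Qed.

Lemma Un_cv_inv_INR2 : Un_cv (fun n => / (INR n + 2)) 0.
Proof.
  intros eps He. destruct (archimed_cor1 eps He) as (N & HN1 & HN2). exists N. intros n Hn.
  pose proof (pos_INR n).
  unfold Rdist. rewrite Rminus_0_r, Rabs_right by (left; apply Rinv_0_lt_compat; lra).
  eapply Rle_lt_trans; [|apply HN1].
  apply Rinv_le_contravar; [apply lt_0_INR; lia|]. apply le_INR in Hn. lra.
Qed.

Lemma inv_INR2_bounds n : 0 < / (INR n + 2) <= 1/2.
Proof.
  pose proof (pos_INR n). split; [apply Rinv_0_lt_compat; lra|].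
  unfold Rdiv. rewrite Rmult_1_l. apply Rinv_le_contravar; lra.
Qed.

Lemma continuity_pt_lipschitz (f : R -> R) t C :
  (forall s, Rabs (f s - f t) <= C * Rabs (s - t)) -> continuity_pt f t.
Proof.
  intros H eps Heps. exists (eps / (Rabs C + 1)). split.
  - apply Rdiv_lt_0_compat; [auto|]. pose proof (Rabs_pos C). lra.
  - intros s [_ Hs]. simpl in *. unfold R_dist in *.
    pose proof (H s). pose proof (Rle_abs C).
    pose proof (Rabs_pos (s - t)). pose proof (Rabs_pos C).
    assert (Rabs (s - t) * (Rabs C + 1) < eps).
    { apply Rmult_lt_reg_r with (/ (Rabs C + 1)); [apply Rinv_0_lt_compat; lra|].
      rewrite Rmult_assoc, Rinv_r by lra. lra. }
    nra.
Qed.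

Lemma continuity_pt_eps (f : R -> R) t : continuity_pt f t ->
  forall eps, 0 < eps -> exists d, 0 < d /\ forall s, Rabs (s - t) < d -> Rabs (f s - f t) < eps.
Proof.
  intros H eps Heps. destruct (H eps Heps) as (d & Hd & Hd2). exists d. split; auto.
  intros s Hs. destruct (Req_dec s t) as [->|Hst].
  - rewrite Rminus_diag, Rabs_R0. auto.
  - apply (Hd2 s). split; [split; [exact I|auto]|]. exact Hs.
Qed.

Lemma convex_ge1_of_eq1_on_unit (f : R -> R) :
  (forall a b l, 0 <= l <= 1 -> f (l * a + (1 - l) * b) <= l * f a + (1 - l) * f b) ->
  (forall s, 0 < s < 1 -> f s = 1) -> forall s, 1 <= f s.
Proof.
  intros Hconv H1 s. apply Rnot_lt_le. intros Hlt.
  assert (Hm : f (1/2) = 1) by (apply H1; lra).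
  destruct (Rlt_or_le 0 s) as [H0|H0]; [destruct (Rlt_or_le s 1) as [Hs1|Hs1]|].
  - rewrite H1 in Hlt; lra.
  - (* [1/2] is a convex combination of [s] and [1/4] *)
    set (l := (1/4) / (s - 1/4)).
    assert (Hl : 0 < l <= 1/3).
    { unfold l. split; [apply Rdiv_lt_0_compat; lra|].
      apply Rmult_le_reg_r with (s - 1/4); [lra|]. unfold Rdiv. rewrite Rmult_assoc, Rinv_l; lra. }
    pose proof (Hconv s (1/4) l ltac:(lra)) as C.
    replace (l * s + (1 - l) * (1/4)) with (1/2) in C by (unfold l; field; lra).
    rewrite Hm, (H1 (1/4)) in C by lra. nra.
  - set (l := (1/4) / (3/4 - s)).
    assert (Hl : 0 < l <= 1/3).
    { unfold l. split; [apply Rdiv_lt_0_compat; lra|].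
      apply Rmult_le_reg_r with (3/4 - s); [lra|]. unfold Rdiv. rewrite Rmult_assoc, Rinv_l; lra. }
    pose proof (Hconv s (3/4) l ltac:(lra)) as C.
    replace (l * s + (1 - l) * (3/4)) with (1/2) in C by (unfold l; field; lra).
    rewrite Hm, (H1 (3/4)) in C by lra. nra.
Qed.

Section FiniteMeasure.
Context {D : pset} {mu : pset -> R} (Hmu : finite_borel_measure_on D mu).

Lemma measure_ext A B : (forall z, A z <-> B z) -> mu A = mu B.
Proof. intros H. rewrite (set_ext A B H). reflexivity. Qed.

Lemma measure_nonneg X : borel_in D X -> 0 <= mu X.
Proof. apply Hmu. Qed.

Lemma borel_in_diff A B : borel_in D A -> borel B -> borel_in D (fun z => A z /\ ~ B z).
Proof.
  intros [H1 H2] H3. split; [|intros z [? ?]; auto]. apply borel_inter, borel_compl; auto.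
Qed.

Lemma borel_in_union2 A B : borel_in D A -> borel_in D B -> borel_in D (fun z => A z \/ B z).
Proof. intros [H1 H2] [H3 H4]. split; [apply borel_union2; auto|intros z [|]; auto]. Qed.

Lemma measure_union2 A B : borel_in D A -> borel_in D B -> (forall z, A z -> B z -> False) ->
  mu (fun z => A z \/ B z) = mu A + mu B.
Proof.
  intros HA HB Hd. destruct Hmu as (_ & H0 & Hc).
  set (F := fun n : nat => match n with O => A | S O => B | _ => fun _ => False end).
  assert (HF : forall n, borel_in D (F n)).
  { intros [|[|n]]; simpl; auto. split; [apply borel_empty|intros z []]. }
  assert (HD : forall n m z, n <> m -> F n z -> F m z -> False).
  { intros [|[|n]] [|[|m]] z Hnm; simpl; try tauto; intros; eauto. }
  specialize (Hc F HF HD).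
  rewrite (measure_ext _ (fun z => exists n, F n z)).
  - apply (uniqueness_sum (fun n => mu (F n))); auto.
    intros eps Heps. exists 1%nat. intros n Hn. unfold R_dist.
    replace (sum_f_R0 (fun n => mu (F n)) n) with (mu A + mu B).
    + rewrite Rminus_diag, Rabs_R0. auto.
    + induction n as [|[|n] IHn]; [lia|reflexivity|].
      rewrite tech5, <- IHn by lia. simpl F. rewrite H0. ring.
  - intros z. split.
    + intros [H|H]; [exists O|exists (S O)]; auto.
    + intros ([|[|n]] & H); simpl in H; tauto.
Qed.

Lemma measure_union2_diff A B : borel_in D A -> borel_in D B ->
  mu (fun z => A z \/ B z) = mu A + mu (fun z => B z /\ ~ A z).
Proof.
  intros HA HB. rewrite <- measure_union2; [|auto|apply borel_in_diff, HA; apply HB|tauto].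
  apply measure_ext. intros z. destruct (classic (A z)); tauto.
Qed.

Lemma measure_mono A B : borel_in D A -> borel_in D B -> (forall z, A z -> B z) -> mu A <= mu B.
Proof.
  intros HA HB Hs.
  rewrite (measure_ext B (fun z => A z \/ B z)) by (intros z; split; auto; intros [|]; auto).
  rewrite measure_union2_diff by auto.
  pose proof (measure_nonneg _ (borel_in_diff B A HB (proj1 HA))). lra.
Qed.

Lemma measure_subadd A B : borel_in D A -> borel_in D B -> mu (fun z => A z \/ B z) <= mu A + mu B.
Proof.
  intros HA HB. rewrite measure_union2_diff by auto.
  pose proof (measure_mono (fun z => B z /\ ~ A z) B (borel_in_diff B A HB (proj1 HA)) HB
    ltac:(intros z []; auto)). lra.
Qed.

End FiniteMeasure.

(** * The gauge of a symmetric convex body *)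

Section ConvexBody.
Variable K : pset.
Hypothesis HK : sym_convex_body K.

Local Notation Sb := (boundary K).

Lemma K_conv x y z s : 0 <= s <= 1 -> K x -> K y ->
  fst z = (1 - s) * fst x + s * fst y -> snd z = (1 - s) * snd x + s * snd y -> K z.
Proof.
  intros Hs Hx Hy E1 E2. replace z with (padd (pscale (1 - s) x) (pscale s y)) by (pt_ext; lra).
  apply HK; auto.
Qed.

Lemma K_opp x : K x -> K (popp x).
Proof. apply HK. Qed.

(* Symmetry and convexity move the interior ball of [K] to the origin. *)
Lemma K_ball0 : exists r, 0 < r /\ forall w, pdist w pzero < r -> K w.
Proof.
  destruct HK as (_ & _ & _ & (x0 & r & Hr & Hball) & _).
  exists r; split; auto. intros w Hw.
  assert (H1 : K (padd x0 w)).
  { apply Hball. replace (pdist (padd x0 w) x0) with (pdist w pzero); auto.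
    unfold pdist, padd, pzero; simpl. f_equal. ring. }
  assert (H2 : K (padd x0 (popp w))).
  { apply Hball. replace (pdist (padd x0 (popp w)) x0) with (pdist w pzero); auto.
    unfold pdist, padd, popp, pzero; simpl. f_equal. ring. }
  apply K_opp in H2.
  apply (K_conv _ _ _ (1/2) ltac:(lra) H1 H2); simpl; lra.
Qed.

Lemma K_0 : K pzero.
Proof.
  destruct K_ball0 as (r & Hr & H). apply H. rewrite pdist_refl. lra.
Qed.

Lemma K_shrink z s : K z -> 0 <= s <= 1 -> K (pscale s z).
Proof. intros Hz Hs. apply (K_conv _ _ _ s Hs K_0 Hz); simpl; lra. Qed.

Lemma K_box : exists M, 0 <= M /\ forall z, K z -> Rabs (fst z) <= M /\ Rabs (snd z) <= M.
Proof.
  destruct HK as (_ & (M & HM) & _). exists M. split.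
  - eapply Rle_trans; [|apply (HM pzero K_0)]. apply sqrt_pos.
  - intros z Hz. specialize (HM z Hz).
    pose proof (Rabs_fst_le_pdist z pzero); pose proof (Rabs_snd_le_pdist z pzero).
    simpl in *. rewrite !Rminus_0_r in *. lra.
Qed.

Definition scalings (x : pt) (l : R) : Prop := 0 < l /\ exists y, K y /\ x = pscale l y.

Lemma scalings_nonempty x : exists l, scalings x l.
Proof.
  destruct K_ball0 as (r & Hr & H).
  set (S := Rabs (fst x) + Rabs (snd x)).
  assert (HS : 0 <= S) by (unfold S; pose proof (Rabs_pos (fst x)); pose proof (Rabs_pos (snd x));
    lra).
  set (l := 2 * S / r + 1).
  assert (Hl : 0 < l) by (unfold l; pose proof (Rdiv_nonneg (2 * S) r ltac:(lra) Hr); lra).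
  exists l. split; auto. exists (pscale (/ l) x). split.
  - apply H. eapply Rle_lt_trans; [apply pdist_le_l1|]. unfold pscale, pzero; simpl.
    rewrite !Rminus_0_r, !Rabs_mult, Rabs_inv, (Rabs_right l) by lra. fold S.
    assert (S < r * l)
      by (unfold l; replace (r * (2 * S / r + 1)) with (2 * S + r) by (field; lra); lra).
    replace (/ l * Rabs (fst x) + / l * Rabs (snd x)) with (S / l) by (unfold S; field; lra).
    apply Rmult_lt_reg_r with l; auto. unfold Rdiv. rewrite Rmult_assoc, Rinv_l; lra.
  - pt_ext; field; lra.
Qed.

Lemma gauge_exists x : exists r, gauge K x r.
Proof.
  destruct (completeness (fun m => scalings x (- m))) as (m & Hub & Hlub).
  - exists 0. intros m [Hm _]. lra.
  - destruct (scalings_nonempty x) as (l & Hl). exists (-l). rewrite Ropp_involutive. auto.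
  - exists (-m). split.
    + intros l Hl. assert (-l <= m) by (apply Hub; rewrite Ropp_involutive; auto). lra.
    + intros b Hb. assert (m <= -b) by (apply Hlub; intros m' Hm'; specialize (Hb _ Hm'); lra). lra.
Qed.

(* The paper's [||x||_K]: the glb always exists ([gauge_exists]), so [epsilon] never falls back
   on its default. *)
Definition knorm (x : pt) : R := epsilon (inhabits 0) (gauge K x).

Lemma gauge_knorm x : gauge K x (knorm x).
Proof. unfold knorm. apply epsilon_spec, gauge_exists. Qed.

Lemma gauge_eq_knorm x r : gauge K x r <-> r = knorm x.
Proof.
  split; [|intros ->; apply gauge_knorm].
  intros [H1 H2]. destruct (gauge_knorm x) as [H3 H4]. apply Rle_antisym; auto.
Qed.

Lemma knorm_le x l : scalings x l -> knorm x <= l.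
Proof. intros H. apply (gauge_knorm x), H. Qed.

Lemma knorm_ge x b : (forall l, scalings x l -> b <= l) -> b <= knorm x.
Proof. intros H. apply (gauge_knorm x), H. Qed.

Lemma knorm_ge0 x : 0 <= knorm x.
Proof. apply knorm_ge. intros l [Hl _]. lra. Qed.

Lemma scalings_gt_knorm x l : knorm x < l -> scalings x l.
Proof.
  intros Hl.
  assert (exists l', scalings x l' /\ l' < l) as (l' & (Hl'0 & y & Hy & Hxy) & Hl'l).
  { apply NNPP. intros Hn. assert (l <= knorm x); [|lra].
    apply knorm_ge. intros l0 H0. destruct (Rle_or_lt l l0); auto. exfalso. apply Hn; eauto. }
  split; [lra|]. exists (pscale (l' / l) y). split.
  - apply K_shrink; auto. split; [apply Rdiv_nonneg; lra|].
    apply Rmult_le_reg_r with l; [lra|]. unfold Rdiv; rewrite Rmult_assoc, Rinv_l; lra.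
  - subst x. pt_ext; field; lra.
Qed.

Lemma knorm_0 : knorm pzero = 0.
Proof.
  apply Rle_antisym; [|apply knorm_ge0].
  apply le_of_forall_gt. intros l Hl. apply knorm_le. split; auto.
  exists pzero. split; [apply K_0|]. pt_ext; ring.
Qed.

Lemma knorm_scale_pos x c : 0 < c -> knorm (pscale c x) = c * knorm x.
Proof.
  assert (Hsc : forall x c l, 0 < c -> scalings x l -> scalings (pscale c x) (c * l)).
  { intros x0 c0 l Hc (Hl & y & Hy & ->). split; [nra|]. exists y; split; auto. pt_ext; ring. }
  intros Hc. apply Rle_antisym.
  - apply le_of_forall_gt. intros l Hl.
    assert (knorm x < l / c)
      by (apply Rmult_lt_reg_l with c; auto; replace (c * (l / c)) with l by (field; lra); lra).
    apply knorm_le. replace l with (c * (l / c)) by (field; lra).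
    apply Hsc, scalings_gt_knorm; auto.
  - apply knorm_ge. intros l Hl.
    assert (H1 := Hsc _ (/ c) _ (Rinv_0_lt_compat _ Hc) Hl).
    replace (pscale (/ c) (pscale c x)) with x in H1 by (pt_ext; field; lra).
    apply knorm_le in H1. apply Rmult_le_compat_l with (r := c) in H1; [|lra].
    replace (c * (/ c * l)) with l in H1 by (field; lra). exact H1.
Qed.

Lemma knorm_opp x : knorm (popp x) = knorm x.
Proof.
  assert (H : forall z, knorm (popp z) <= knorm z).
  { intros z. apply le_of_forall_gt. intros l Hl. apply knorm_le.
    destruct (scalings_gt_knorm z l Hl) as (Hl0 & y & Hy & ->).
    split; auto. exists (popp y); split; [apply K_opp; auto|]. pt_ext; ring. }
  apply Rle_antisym; auto. rewrite <- (H (popp x)).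
  replace (popp (popp x)) with x by (pt_ext; ring). lra.
Qed.

Lemma knorm_scale c x : knorm (pscale c x) = Rabs c * knorm x.
Proof.
  destruct (Rtotal_order c 0) as [Hc|[->|Hc]].
  - replace (pscale c x) with (popp (pscale (- c) x)) by (pt_ext; ring).
    rewrite knorm_opp, knorm_scale_pos, Rabs_left; lra.
  - replace (pscale 0 x) with pzero by (pt_ext; ring). rewrite knorm_0, Rabs_R0. ring.
  - rewrite knorm_scale_pos, Rabs_right; lra.
Qed.

Lemma knorm_triangle x y : knorm (padd x y) <= knorm x + knorm y.
Proof.
  apply le_of_forall_gt. intros l Hl.
  set (d := (l - knorm x - knorm y) / 2).
  destruct (scalings_gt_knorm x (knorm x + d) ltac:(unfold d; lra)) as (Ha & y1 & Hy1 & E1).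
  destruct (scalings_gt_knorm y (knorm y + d) ltac:(unfold d; lra)) as (Hb & y2 & Hy2 & E2).
  replace l with ((knorm x + d) + (knorm y + d)) by (unfold d; field).
  set (a := knorm x + d) in *. set (b := knorm y + d) in *.
  apply knorm_le. split; [lra|].
  exists (padd (pscale (a / (a + b)) y1) (pscale (b / (a + b)) y2)). split.
  - apply (K_conv y1 y2 _ (b / (a + b))); auto; [|simpl; field; lra|simpl; field; lra].
    split; [apply Rdiv_nonneg; lra|].
    apply Rmult_le_reg_r with (a + b); [lra|]. unfold Rdiv; rewrite Rmult_assoc, Rinv_l; lra.
  - rewrite E1, E2. pt_ext; field; lra.
Qed.

Lemma knorm_pos x : x <> pzero -> 0 < knorm x.
Proof.
  intros Hx. destruct (Rle_or_lt (knorm x) 0) as [H|]; auto. exfalso.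
  destruct K_box as (M & HM0 & HM).
  assert (Hsmall : forall l, 0 < l -> Rabs (fst x) <= l * M /\ Rabs (snd x) <= l * M).
  { intros l Hl. destruct (scalings_gt_knorm x l ltac:(lra)) as (_ & y & Hy & ->).
    destruct (HM y Hy). unfold pscale; simpl. rewrite !Rabs_mult, (Rabs_right l) by lra.
    split; apply Rmult_le_compat_l; lra. }
  assert (Hzero : forall a, (forall l, 0 < l -> Rabs a <= l * M) -> a = 0).
  { intros a Ha. destruct (Req_dec a 0) as [|Hne]; auto. exfalso.
    pose proof (Rabs_pos_lt a Hne) as Hpos.
    specialize (Ha (Rabs a / (2 * (M + 1))) ltac:(apply Rdiv_lt_0_compat; lra)).
    assert (Rabs a / (2 * (M + 1)) * (2 * (M + 1)) = Rabs a) by (field; lra).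
    assert (0 < Rabs a / (2 * (M + 1))) by (apply Rdiv_lt_0_compat; lra). nra. }
  apply Hx, pt_eq; apply Hzero; intros l Hl; apply Hsmall, Hl.
Qed.

Lemma K_iff_knorm_le1 x : K x <-> knorm x <= 1.
Proof.
  split.
  - intros Hx. apply knorm_le. split; [lra|]. exists x; split; auto. pt_ext; ring.
  - intros H. apply NNPP. intros Hn.
    destruct HK as (Hcl & _). destruct (Hcl x Hn) as (rho & Hrho & Hb).
    set (S := Rabs (fst x) + Rabs (snd x)).
    assert (HS : 0 <= S) by (unfold S; pose proof (Rabs_pos (fst x)); pose proof (Rabs_pos (snd x));
    lra).
    set (d := rho / (2 * (S + 1))).
    assert (Hd : 0 < d) by (apply Rdiv_lt_0_compat; lra).
    destruct (scalings_gt_knorm x (1 + d) ltac:(lra)) as (_ & y & Hy & Ex).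
    apply (Hb y); auto.
    eapply Rle_lt_trans; [apply pdist_le_l1|].
    assert (E1 : fst y - fst x = - d * fst y) by (rewrite Ex; simpl; ring).
    assert (E2 : snd y - snd x = - d * snd y) by (rewrite Ex; simpl; ring).
    rewrite E1, E2, !Rabs_mult, Rabs_Ropp, (Rabs_right d) by lra.
    assert (Hy1 : Rabs (fst y) + Rabs (snd y) <= S).
    { unfold S. rewrite Ex; simpl. rewrite !Rabs_mult, (Rabs_right (1 + d)) by lra.
      pose proof (Rabs_pos (fst y)); pose proof (Rabs_pos (snd y)). nra. }
    assert (d * (2 * (S + 1)) = rho) by (unfold d; field; lra).
    nra.
Qed.

Lemma knorm_l1 v : knorm v <= (knorm (1, 0) + knorm (0, 1)) * (Rabs (fst v) + Rabs (snd v)).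
Proof.
  replace v with (padd (pscale (fst v) (1, 0)) (pscale (snd v) (0, 1))) by (pt_ext; ring).
  eapply Rle_trans; [apply knorm_triangle|]. rewrite !knorm_scale. simpl.
  rewrite !Rmult_1_r, !Rmult_0_r, !Rplus_0_r, !Rplus_0_l.
  pose proof (knorm_ge0 (1, 0)); pose proof (knorm_ge0 (0, 1)).
  pose proof (Rabs_pos (fst v)); pose proof (Rabs_pos (snd v)). nra.
Qed.

Lemma knorm_lipschitz : lipschitz knorm.
Proof.
  set (C := knorm (1, 0) + knorm (0, 1)).
  assert (H : forall a b, knorm a - knorm b <= C * (Rabs (fst a - fst b) + Rabs (snd a - snd b))).
  { intros a b. pose proof (knorm_triangle (padd a (popp b)) b) as T.
    replace (padd (padd a (popp b)) b) with a in T by (pt_ext; ring).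
    pose proof (knorm_l1 (padd a (popp b))) as L. fold C in L.
    change (fst (padd a (popp b))) with (fst a - fst b) in L.
    change (snd (padd a (popp b))) with (snd a - snd b) in L. lra. }
  exists C. split; [unfold C; pose proof (knorm_ge0 (1, 0)); pose proof (knorm_ge0 (0, 1)); lra|].
  intros a b. apply Rabs_le. split; [|apply H].
  specialize (H b a). rewrite (Rabs_minus_sym (fst b)), (Rabs_minus_sym (snd b)) in H. lra.
Qed.

Lemma interior_iff_knorm_lt1 x : interior K x <-> knorm x < 1.
Proof.
  split.
  - intros (r & Hr & Hb).
    set (S := Rabs (fst x) + Rabs (snd x)).
    assert (HS : 0 <= S) by (unfold S; pose proof (Rabs_pos (fst x)); pose proof (Rabs_pos (snd x));
    lra).
    set (d := r / (2 * (S + 1))).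
    assert (Hd : 0 < d) by (apply Rdiv_lt_0_compat; lra).
    assert (Hw : K (pscale (1 + d) x)).
    { apply Hb. eapply Rle_lt_trans; [apply pdist_le_l1|]. simpl.
      replace ((1 + d) * fst x - fst x) with (d * fst x) by ring.
      replace ((1 + d) * snd x - snd x) with (d * snd x) by ring.
      rewrite !Rabs_mult, (Rabs_right d) by lra.
      assert (d * (2 * (S + 1)) = r) by (unfold d; field; lra). unfold S in *. nra. }
    apply K_iff_knorm_le1 in Hw. rewrite knorm_scale, Rabs_right in Hw by lra.
    pose proof (knorm_ge0 x). nra.
  - intros H. destruct knorm_lipschitz as (C & HC & HL).
    set (r := (1 - knorm x) / (2 * (C + 1))).
    assert (Hr : 0 < r) by (apply Rdiv_lt_0_compat; lra).
    exists r. split; auto. intros w Hw. apply K_iff_knorm_le1.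
    specialize (HL w x). pose proof (Rabs_fst_le_pdist w x). pose proof (Rabs_snd_le_pdist w x).
    assert (r * (2 * (C + 1)) = 1 - knorm x) by (unfold r; field; lra).
    pose proof (Rle_abs (knorm w - knorm x)). nra.
Qed.

Lemma boundary_iff_knorm1 x : Sb x <-> knorm x = 1.
Proof.
  split.
  - intros [H1 H2].
    assert (Kx : K x).
    { apply NNPP. intros Hn. destruct (proj1 HK x Hn) as (rho & Hrho & Hb).
      destruct (H1 rho Hrho) as (w & Hw & Hd). apply (Hb w); auto. }
    apply K_iff_knorm_le1 in Kx.
    destruct (Rle_lt_or_eq_dec _ _ Kx); auto. exfalso; apply H2, interior_iff_knorm_lt1; auto.
  - intros H. split.
    + intros r Hr. exists x. split; [apply K_iff_knorm_le1; lra|]. rewrite pdist_refl; auto.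
    + intros Hi. apply interior_iff_knorm_lt1 in Hi. lra.
Qed.

Lemma boundary_closed : is_closed Sb.
Proof.
  unfold is_closed.
  rewrite (set_ext _ (fun z => 0 < knorm z - 1 \/ 0 < - (knorm z - 1))).
  - assert (Hl : lipschitz (fun z => knorm z - 1)).
    { destruct knorm_lipschitz as (C & HC & H). exists C. split; auto. intros w z.
      replace (knorm w - 1 - (knorm z - 1)) with (knorm w - knorm z) by ring. apply H. }
    intros z Hz. destruct Hz as [Hz|Hz];
      [destruct (open_pos _ Hl z Hz) as (r & Hr & H)
      |destruct (open_pos _ (lipschitz_opp _ Hl) z Hz) as (r & Hr & H)];
      exists r; split; auto.
  - intros z. rewrite boundary_iff_knorm1. lra.
Qed.

Lemma boundary_neq0 x : Sb x -> x <> pzero.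
Proof. intros H ->. apply boundary_iff_knorm1 in H. rewrite knorm_0 in H. lra. Qed.

Lemma boundary_opp z : Sb (popp z) <-> Sb z.
Proof. rewrite !boundary_iff_knorm1, knorm_opp. tauto. Qed.

Lemma boundary_normalize y : y <> pzero -> Sb (pscale (/ knorm y) y).
Proof.
  intros Hy. apply boundary_iff_knorm1. rewrite knorm_scale.
  pose proof (knorm_pos y Hy). rewrite Rabs_right; [field; lra|].
  left; apply Rinv_0_lt_compat; auto.
Qed.

Lemma boundary_K z : Sb z -> K z.
Proof. intros H. apply K_iff_knorm_le1. apply boundary_iff_knorm1 in H. lra. Qed.

Lemma boundary_det0 u v : Sb u -> Sb v -> det u v = 0 -> v = u \/ v = popp u.
Proof.
  intros Hu Hv Hd. destruct (det_eq0_scale u v (boundary_neq0 u Hu) Hd) as (l & ->).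
  apply boundary_iff_knorm1 in Hu, Hv. rewrite knorm_scale, Hu in Hv.
  destruct (Rcase_abs l).
  - rewrite Rabs_left in Hv by lra. assert (l = -1) by lra. subst. right. pt_ext; ring.
  - rewrite Rabs_right in Hv by lra. assert (l = 1) by lra. subst. left. pt_ext; ring.
Qed.

(** * Birkhoff orthogonality *)

Lemma birkhoff_iff x y : birkhoff K x y <->
  x <> pzero /\ y <> pzero /\ forall t, knorm x <= knorm (padd x (pscale t y)).
Proof.
  unfold birkhoff. split.
  - intros (H1 & H2 & H3). repeat split; auto. intros t. apply (H3 t); apply gauge_eq_knorm; auto.
  - intros (H1 & H2 & H3). repeat split; auto. intros t r s Hr Hs.
    apply gauge_eq_knorm in Hr, Hs. subst. auto.
Qed.

Lemma birkhoff_scaler x y c : birkhoff K x y -> c <> 0 -> birkhoff K x (pscale c y).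
Proof.
  intros H Hc. apply birkhoff_iff in H as (H1 & H2 & H3). apply birkhoff_iff.
  repeat split; auto.
  - intros E. apply H2. pose proof (f_equal fst E) as E1. pose proof (f_equal snd E) as E2.
    simpl in E1, E2. apply Rmult_integral in E1 as [|], E2 as [|]; try lra. pt_ext; auto.
  - intros t. specialize (H3 (t * c)).
    replace (padd x (pscale t (pscale c y))) with (padd x (pscale (t * c) y)) by (pt_ext; ring).
    auto.
Qed.

Lemma birkhoff_det_neq0 x y : Sb x -> Sb y -> birkhoff K x y -> det x y <> 0.
Proof.
  intros Hx Hy Hb Hd. apply birkhoff_iff in Hb as (_ & _ & H3).
  apply boundary_iff_knorm1 in Hx as Hx1.
  destruct (boundary_det0 x y Hx Hy Hd) as [->| ->]; [specialize (H3 (-1))|specialize (H3 1)];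
    [replace (padd x (pscale (-1) x)) with pzero in H3 by (pt_ext; ring)
    |replace (padd x (pscale 1 (popp x))) with pzero in H3 by (pt_ext; ring)];
    rewrite knorm_0 in H3; lra.
Qed.

(* The two-dimensional Hahn-Banach theorem: a linear functional [s x + t w |-> s + t c]
   equal to 1 at [x] and dominated by the gauge. *)
Lemma knorm_supporting_functional x w : knorm x = 1 ->
  exists c, forall s t, s + t * c <= knorm (padd (pscale s x) (pscale t w)).
Proof.
  intros Hx1.
  set (L := fun u => u - knorm (padd (pscale u x) (popp w))).
  set (U := fun v => knorm (padd (pscale v x) w) - v).
  assert (HLU : forall u v, L u <= U v).
  { intros u v. unfold L, U.
    pose proof (knorm_triangle (padd (pscale u x) (popp w)) (padd (pscale v x) w)) as T.
    replace (padd (padd (pscale u x) (popp w)) (padd (pscale v x) w)) with (pscale (u + v) x) in T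
      by (pt_ext; ring).
    rewrite knorm_scale, Hx1 in T. pose proof (Rle_abs (u + v)). lra. }
  destruct (completeness (fun m => exists u, m = L u)) as (c & Hub & Hlub).
  { exists (U 0). intros m (u & ->). apply HLU. }
  { exists (L 0), 0. reflexivity. }
  assert (Hc1 : forall u, L u <= c) by (intros u; apply Hub; exists u; reflexivity).
  assert (Hc2 : forall v, c <= U v) by (intros v; apply Hlub; intros m (u & ->); apply HLU).
  exists c. intros s t. destruct (Rtotal_order t 0) as [Ht|[->|Ht]].
  - specialize (Hc1 (s / - t)). unfold L in Hc1.
    replace (padd (pscale s x) (pscale t w))
      with (pscale (- t) (padd (pscale (s / - t) x) (popp w))) by (pt_ext; field; lra).
    rewrite knorm_scale, Rabs_right by lra.
    apply Rmult_le_compat_l with (r := - t) in Hc1; [|lra].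
    replace (- t * (s / - t - knorm (padd (pscale (s / - t) x) (popp w))))
      with (s - - t * knorm (padd (pscale (s / - t) x) (popp w))) in Hc1 by (field; lra).
    lra.
  - replace (padd (pscale s x) (pscale 0 w)) with (pscale s x) by (pt_ext; ring).
    rewrite knorm_scale, Hx1. pose proof (Rle_abs s). lra.
  - specialize (Hc2 (s / t)). unfold U in Hc2.
    replace (padd (pscale s x) (pscale t w)) with (pscale t (padd (pscale (s / t) x) w))
      by (pt_ext; field; lra).
    rewrite knorm_scale, Rabs_right by lra.
    apply Rmult_le_compat_l with (r := t) in Hc2; [|lra].
    replace (t * (knorm (padd (pscale (s / t) x) w) - s / t))
      with (t * knorm (padd (pscale (s / t) x) w) - s) in Hc2 by (field; lra).
    lra.
Qed.

(* The kernel of the supporting functional is Birkhoff orthogonal to [x]. *)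
Lemma birkhoff_exists x : Sb x -> exists y, Sb y /\ birkhoff K x y.
Proof.
  intros Hx. apply boundary_iff_knorm1 in Hx as Hx1.
  set (w := (- snd x, fst x)).
  destruct (knorm_supporting_functional x w Hx1) as (c & Hc).
  set (y0 := padd w (pscale (- c) x)).
  assert (Hy0 : y0 <> pzero).
  { intros E. apply (boundary_neq0 x Hx).
    assert (Hd : det x y0 = fst x ^ 2 + snd x ^ 2)
      by (unfold y0, w, det, padd, pscale; simpl; ring).
    rewrite E in Hd. unfold det, pzero in Hd; simpl in Hd. pt_ext; nra. }
  pose proof (knorm_pos y0 Hy0).
  exists (pscale (/ knorm y0) y0). split; [apply boundary_normalize; auto|].
  apply birkhoff_scaler; [|apply Rinv_neq_0_compat; lra].
  apply birkhoff_iff. repeat split; auto; [apply boundary_neq0; auto|].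
  intros t. rewrite Hx1. specialize (Hc (1 - t * c) t).
  replace (padd x (pscale t y0)) with (padd (pscale (1 - t * c) x) (pscale t w))
    by (unfold y0; pt_ext; ring).
  lra.
Qed.

(* The gauge is convex along lines, and equal to 1 on an open boundary segment, hence at least
   1 on the whole line through it. *)
Lemma segment_birkhoff a b : a <> b -> (forall s, 0 < s < 1 -> Sb (segpt a b s)) ->
  forall s, 0 < s < 1 -> birkhoff K (segpt a b s) (padd b (popp a)).
Proof.
  intros Hab Hs s Hs1.
  assert (Hge : forall s', 1 <= knorm (segpt a b s')).
  { apply convex_ge1_of_eq1_on_unit; [|intros; apply boundary_iff_knorm1, Hs; auto].
    intros s1 s2 l Hl.
    replace (segpt a b (l * s1 + (1 - l) * s2))
      with (padd (pscale l (segpt a b s1)) (pscale (1 - l) (segpt a b s2)))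
      by (unfold segpt; pt_ext; ring).
    eapply Rle_trans; [apply knorm_triangle|]. rewrite !knorm_scale, !Rabs_right by lra. lra. }
  apply birkhoff_iff. split; [apply boundary_neq0, Hs; auto|split; [apply segment_dir_neq0; auto|]].
  intros t. rewrite (proj1 (boundary_iff_knorm1 _) (Hs s Hs1)).
    replace (padd (segpt a b s) (pscale t (padd b (popp a)))) with (segpt a b (s + t))
      by (unfold segpt; pt_ext; ring).
    apply Hge.
Qed.

Lemma knorm_pconv a A : pconv a A -> Un_cv (fun n => knorm (a n)) (knorm A).
Proof.
  intros [A1 A2] eps He. destruct knorm_lipschitz as (C & HC & HL).
  set (e := eps / (2 * (C + 1))).
  assert (He' : 0 < e) by (apply Rdiv_lt_0_compat; lra).
  destruct (A1 e He') as (N1 & H1). destruct (A2 e He') as (N2 & H2).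
  exists (max N1 N2). intros n Hn. unfold Rdist.
  eapply Rle_lt_trans; [apply HL|].
  specialize (H1 n ltac:(lia)). specialize (H2 n ltac:(lia)). unfold Rdist in H1, H2.
  assert (e * (2 * (C + 1)) = eps) by (unfold e; field; lra).
  nra.
Qed.

Lemma boundary_limit (a : nat -> pt) A : pconv a A -> (forall n, Sb (a n)) -> Sb A.
Proof.
  intros Ha Hs. apply boundary_iff_knorm1. pose proof (knorm_pconv _ _ Ha) as C.
  assert (H1 : forall n, knorm (a n) = 1) by (intros n; apply boundary_iff_knorm1, Hs).
  apply Rle_antisym; [apply (Un_cv_le _ _ _ C)|apply (Un_cv_ge _ _ _ C)]; intros n; rewrite H1; lra.
Qed.

Lemma birkhoff_limit (a b : nat -> pt) A B : pconv a A -> pconv b B -> Sb A -> Sb B ->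
  (forall n, Sb (a n)) -> (forall n, birkhoff K (a n) (b n)) -> birkhoff K A B.
Proof.
  intros Ha Hb HA HB Hsa Hbk. apply birkhoff_iff.
  split; [apply boundary_neq0; auto|split; [apply boundary_neq0; auto|]].
  intros t. rewrite (proj1 (boundary_iff_knorm1 _) HA).
  apply (Un_cv_ge (fun n => knorm (padd (a n) (pscale t (b n))))).
  - apply knorm_pconv, pconv_add_scale; auto.
  - intros n. destruct (proj1 (birkhoff_iff _ _) (Hbk n)) as (_ & _ & H).
    rewrite <- (proj1 (boundary_iff_knorm1 _) (Hsa n)). apply H.
Qed.

Lemma birkhoff_exists_pos x : Sb x -> exists y, Sb y /\ birkhoff K x y /\ 0 < det x y.
Proof.
  intros Hx. destruct (birkhoff_exists x Hx) as (y & Hy & Hb).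
  pose proof (birkhoff_det_neq0 x y Hx Hy Hb) as Hd.
  destruct (Rtotal_order (det x y) 0) as [Hn|[Hz|Hp]]; [|contradiction|eauto].
  exists (pscale (-1) y). split; [|split].
  - apply boundary_iff_knorm1.
    rewrite knorm_scale, (proj1 (boundary_iff_knorm1 _) Hy), Rabs_left; lra.
  - apply birkhoff_scaler; auto; lra.
  - rewrite det_scaler. lra.
Qed.

Definition chain (x y w : pt) : Prop := Sb x /\ Sb y /\ Sb w /\ birkhoff K x y /\ birkhoff K y w /\
  0 < det x y /\ 0 < det y w.

Lemma chain_exists x : Sb x -> exists y w, chain x y w.
Proof.
  intros Hx. destruct (birkhoff_exists_pos x Hx) as (y & Hy & Hb & Hd).
  destruct (birkhoff_exists_pos y Hy) as (w & Hw & Hbw & Hdw).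
  exists y, w. unfold chain; tauto.
Qed.

(* If [w = -x] then [y -| x], so [x] is an Auerbach point. *)
Lemma chain_det_neq0 x y w : chain x y w -> ~ auerbach K x -> det x w <> 0.
Proof.
  intros (Hx & Hy & Hw & Bxy & Byw & Dxy & Dyw) HnA Hd. apply HnA.
  split; auto. exists y. split; [auto|split; auto].
  destruct (boundary_det0 x w Hx Hw Hd) as [-> | ->]; auto.
  replace x with (pscale (-1) (popp x)) by (pt_ext; ring). apply birkhoff_scaler; auto; lra.
Qed.

Lemma chain_limit (z : nat -> pt) x (Y W : nat -> pt) : pconv z x -> (forall n, Sb (z n)) ->
  (forall n, chain (z n) (Y n) (W n)) ->
  exists phi Yl Wl, subseq phi /\ chain x Yl Wl /\ pconv (fun n => W (phi n)) Wl.
Proof.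
  intros Hz Hzs Hch.
  assert (Hx : Sb x) by (apply (boundary_limit z); auto).
  destruct K_box as (M & HM0 & HM).
  destruct (bounded_pconv_subseq Y M) as (phi1 & Yl & Hp1 & HY).
  { intros n. apply HM, boundary_K, (Hch n). }
  destruct (bounded_pconv_subseq (fun n => W (phi1 n)) M) as (phi2 & Wl & Hp2 & HW).
  { intros n. apply HM, boundary_K, (Hch (phi1 n)). }
  set (phi := fun n => phi1 (phi2 n)).
  assert (Hp : subseq phi) by exact (subseq_comp _ _ Hp1 Hp2).
  assert (HY' : pconv (fun n => Y (phi n)) Yl)
    by (apply (pconv_subseq (fun n => Y (phi1 n))); auto).
  assert (Hz' : pconv (fun n => z (phi n)) x) by (apply pconv_subseq; auto).
  exists phi, Yl, Wl. split; [auto|split; [|auto]].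
  assert (SY : Sb Yl) by (apply (boundary_limit _ _ HY'); intros n; apply (Hch (phi n))).
  assert (SW : Sb Wl) by (apply (boundary_limit _ _ HW); intros n; apply (Hch (phi n))).
  assert (B1 : birkhoff K x Yl)
    by (apply (birkhoff_limit _ _ _ _ Hz' HY' Hx SY); intros n; apply (Hch (phi n))).
  assert (B2 : birkhoff K Yl Wl)
    by (apply (birkhoff_limit _ _ _ _ HY' HW SY SW); intros n; apply (Hch (phi n))).
  assert (D1 : 0 <= det x Yl)
    by (apply (Un_cv_ge _ _ _ (pconv_det _ _ _ _ Hz' HY')); intros n; left; apply (Hch (phi n))).
  assert (D2 : 0 <= det Yl Wl)
    by (apply (Un_cv_ge _ _ _ (pconv_det _ _ _ _ HY' HW)); intros n; left; apply (Hch (phi n))).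
  pose proof (birkhoff_det_neq0 x Yl Hx SY B1). pose proof (birkhoff_det_neq0 Yl Wl SY SW B2).
  unfold chain. do 5 (split; [auto|]). split; lra.
Qed.

Lemma chain_limit_near (z : nat -> pt) x : pconv z x -> (forall n, Sb (z n)) ->
  exists Yl Wl, chain x Yl Wl /\ forall eps, 0 < eps -> exists n Y W, chain (z n) Y W /\
    Rabs (det (z n) W - det x Wl) < eps /\ Rabs (det x W - det x Wl) < eps.
Proof.
  intros Hz Hzs.
  destruct (choice (fun n p => chain (z n) (fst p) (snd p))) as (f & Hf).
  { intros n. destruct (chain_exists (z n) (Hzs n)) as (y & w & C). exists (y, w). auto. }
  destruct (chain_limit z x (fun n => fst (f n)) (fun n => snd (f n)) Hz Hzs Hf)
    as (phi & Yl & Wl & Hphi & Cl & HW).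
  exists Yl, Wl. split; auto. intros eps He.
  destruct (pconv_det _ _ _ _ (pconv_subseq _ _ _ Hphi Hz) HW eps He) as (N1 & HN1).
  destruct (pconv_det _ _ _ _ (pconv_const x) HW eps He) as (N2 & HN2).
  exists (phi (max N1 N2)), (fst (f (phi (max N1 N2)))), (snd (f (phi (max N1 N2)))).
  split; [apply Hf|split; [apply (HN1 (max N1 N2))|apply (HN2 (max N1 N2))]; lia].
Qed.

(** * Arcs of the boundary *)

Lemma arc_set_rev g : arc_set (fun t => g (1 - t)) = arc_set g.
Proof.
  apply set_ext. intros z. split.
  - intros (t & Ht & ->). exists (1 - t). split; auto; lra.
  - intros (t & Ht & ->). exists (1 - t). split; [lra|]. f_equal; ring.
Qed.

Lemma arc_param_rev S g x y : arc_param S g x y -> arc_param S (fun t => g (1 - t)) y x.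
Proof.
  intros (H1 & H2 & H3 & H4 & H5). split; [|split; [|split; [|split]]].
  - intros t Ht. apply H1; lra.
  - intros t s Ht Hs E. apply H2 in E; lra.
  - intros t Ht eps Heps. destruct (H3 (1 - t) ltac:(lra) eps Heps) as (d & Hd & H).
    exists d. split; auto. intros s Hs Hst. apply H; [lra|].
    replace (1 - s - (1 - t)) with (- (s - t)) by ring. rewrite Rabs_Ropp; auto.
  - rewrite Rminus_0_r. auto.
  - rewrite Rminus_diag. auto.
Qed.

Definition Arc (u v : pt) : pset := fun z => Sb z /\ 0 <= det u z /\ 0 <= det z v.

Section Arcs.
Variables u v : pt.
Hypothesis Hu : Sb u.
Hypothesis Hv : Sb v.
Hypothesis Huv : 0 < det u v.

Definition arcpt (t : R) : pt := pscale (/ knorm (segpt u v t)) (segpt u v t).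

Lemma knorm_segpt_pos t : 0 <= t <= 1 -> 0 < knorm (segpt u v t).
Proof. intros Ht. apply knorm_pos, segpt_neq0; auto. Qed.

Lemma arcpt_boundary t : 0 <= t <= 1 -> Sb (arcpt t).
Proof. intros Ht. apply boundary_normalize, segpt_neq0; auto. Qed.

Lemma det_arcpt_l t : 0 <= t <= 1 -> det u (arcpt t) = t * det u v / knorm (segpt u v t).
Proof.
  intros Ht. rewrite <- det_segpt_l. pose proof (knorm_segpt_pos t Ht).
  unfold arcpt, det, pscale; simpl. field. lra.
Qed.

Lemma det_arcpt_r t : 0 <= t <= 1 -> det (arcpt t) v = (1 - t) * det u v / knorm (segpt u v t).
Proof.
  intros Ht. rewrite <- det_segpt_r. pose proof (knorm_segpt_pos t Ht).
  unfold arcpt, det, pscale; simpl. field. lra.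
Qed.

Lemma arcpt_inj t s : 0 <= t <= 1 -> 0 <= s <= 1 -> arcpt t = arcpt s -> t = s.
Proof.
  intros Ht Hs E.
  pose proof (det_arcpt_l t Ht) as A1. pose proof (det_arcpt_l s Hs) as A2.
  pose proof (det_arcpt_r t Ht) as B1. pose proof (det_arcpt_r s Hs) as B2.
  rewrite E in A1, B1. rewrite A1 in A2. rewrite B1 in B2.
  pose proof (knorm_segpt_pos t Ht). pose proof (knorm_segpt_pos s Hs).
  set (a := knorm (segpt u v t)) in *. set (b := knorm (segpt u v s)) in *.
  set (D := det u v) in *.
  apply (f_equal (fun r => r * a * b / D)) in A2, B2.
  replace (t * D / a * a * b / D) with (t * b) in A2 by (field; lra).
  replace (s * D / b * a * b / D) with (s * a) in A2 by (field; lra).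
  replace ((1 - t) * D / a * a * b / D) with ((1 - t) * b) in B2 by (field; lra).
  replace ((1 - s) * D / b * a * b / D) with ((1 - s) * a) in B2 by (field; lra).
  assert (a = b) by lra. subst. nra.
Qed.

Lemma arcpt_continuous t : 0 <= t <= 1 -> forall eps, 0 < eps -> exists delta, 0 < delta /\
  forall s, 0 <= s <= 1 -> Rabs (s - t) < delta -> pdist (arcpt s) (arcpt t) < eps.
Proof.
  intros Ht eps Heps.
  assert (Hlin : forall (p : pt -> R) C,
    (forall a b, Rabs (p a - p b) <= C * Rabs (fst a - fst b) + C * Rabs (snd a - snd b)) ->
    continuity_pt (fun s => p (segpt u v s)) t).
  { intros p C Hp. apply continuity_pt_lipschitz with
      (C := C * Rabs (fst v - fst u) + C * Rabs (snd v - snd u)).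
    intros s. eapply Rle_trans; [apply Hp|]. unfold segpt, padd, pscale; cbn [fst snd].
    replace ((1 - s) * fst u + s * fst v - ((1 - t) * fst u + t * fst v))
      with ((s - t) * (fst v - fst u)) by ring.
    replace ((1 - s) * snd u + s * snd v - ((1 - t) * snd u + t * snd v))
      with ((s - t) * (snd v - snd u)) by ring.
    rewrite !Rabs_mult. lra. }
  destruct knorm_lipschitz as (C & HC & HL).
  assert (CN : continuity_pt (fun s => knorm (segpt u v s)) t).
  { apply (Hlin knorm C). intros a b. rewrite <- Rmult_plus_distr_l. apply HL. }
  assert (C1 : continuity_pt (fun s => fst (segpt u v s)) t).
  { apply (Hlin fst 1). intros a b. pose proof (Rabs_pos (snd a - snd b)). lra. }
  assert (C2 : continuity_pt (fun s => snd (segpt u v s)) t).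
  { apply (Hlin snd 1). intros a b. pose proof (Rabs_pos (fst a - fst b)). lra. }
  pose proof (knorm_segpt_pos t Ht) as HNt.
  destruct (continuity_pt_eps _ _ (continuity_pt_div _ _ t C1 CN ltac:(lra)) (eps / 2) ltac:(lra))
    as (d1 & Hd1 & H1).
  destruct (continuity_pt_eps _ _ (continuity_pt_div _ _ t C2 CN ltac:(lra)) (eps / 2) ltac:(lra))
    as (d2 & Hd2 & H2).
  exists (Rmin d1 d2). split; [apply Rmin_pos; auto|].
  intros s Hs Hst. eapply Rle_lt_trans; [apply pdist_le_l1|].
  pose proof (Rmin_l d1 d2); pose proof (Rmin_r d1 d2).
  specialize (H1 s ltac:(lra)). specialize (H2 s ltac:(lra)). unfold div_fct in H1, H2.
  unfold arcpt, pscale; cbn [fst snd]. rewrite !(Rmult_comm (/ _)). lra.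
Qed.

Lemma arcpt_0 : arcpt 0 = u.
Proof.
  unfold arcpt. replace (segpt u v 0) with u by (unfold segpt; pt_ext; ring).
  apply boundary_iff_knorm1 in Hu. rewrite Hu. pt_ext; field.
Qed.

Lemma arcpt_1 : arcpt 1 = v.
Proof.
  unfold arcpt. replace (segpt u v 1) with v by (unfold segpt; pt_ext; ring).
  apply boundary_iff_knorm1 in Hv. rewrite Hv. pt_ext; field.
Qed.

Lemma arc_param_arcpt : arc_param Sb arcpt u v.
Proof.
  split; [|split; [|split; [|split]]].
  - apply arcpt_boundary.
  - apply arcpt_inj.
  - apply arcpt_continuous.
  - apply arcpt_0.
  - apply arcpt_1.
Qed.

Lemma Arc_arcpt z : Arc u v z -> exists t, 0 <= t <= 1 /\ z = arcpt t.
Proof.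
  intros (Hz & H1 & H2).
  set (D := det u v) in *. set (a := det z v / D). set (b := det u z / D).
  assert (Ha : 0 <= a) by (apply Rdiv_nonneg; auto).
  assert (Hb : 0 <= b) by (apply Rdiv_nonneg; auto).
  assert (Ez : z = padd (pscale a u) (pscale b v)).
  { pose proof (det_cramer u v z) as Dz. fold D in Dz.
    replace z with (pscale (/ D) (pscale D z)) at 1 by (pt_ext; field; lra).
    rewrite Dz. unfold a, b. pt_ext; field; lra. }
  assert (Hab : 0 < a + b).
  { destruct (Rle_lt_or_eq_dec 0 (a + b) ltac:(lra)) as [Hlt|E]; [exact Hlt|].
    exfalso. apply (boundary_neq0 z Hz). rewrite Ez.
    replace a with 0 by lra. replace b with 0 by lra. pt_ext; ring. }
  exists (b / (a + b)). split.
  - split; [apply Rdiv_nonneg; lra|].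
    apply Rmult_le_reg_r with (a + b); [lra|]. unfold Rdiv; rewrite Rmult_assoc, Rinv_l; lra.
  - assert (Eseg : segpt u v (b / (a + b)) = pscale (/ (a + b)) z)
      by (rewrite Ez; unfold segpt; pt_ext; field; lra).
    unfold arcpt. rewrite Eseg, knorm_scale. apply boundary_iff_knorm1 in Hz. rewrite Hz.
    rewrite Rabs_right by (left; apply Rinv_0_lt_compat; lra).
    pt_ext; field; lra.
Qed.

Lemma arc_set_arcpt : arc_set arcpt = Arc u v.
Proof.
  apply set_ext. intros z. split; [|apply Arc_arcpt].
  intros (t & Ht & ->). split; [apply arcpt_boundary; auto|].
  rewrite det_arcpt_l, det_arcpt_r by auto. pose proof (knorm_segpt_pos t Ht).
  split; apply Rdiv_nonneg; nra.
Qed.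

Lemma Arc_no_antipodal z : Arc u v z -> Arc u v (popp z) -> False.
Proof.
  intros (Hz & H1 & H2) (_ & H3 & H4). rewrite det_oppr in H3. rewrite det_oppl in H4.
  pose proof (det_cramer u v z) as Dz.
  replace (det u z) with 0 in Dz by lra. replace (det z v) with 0 in Dz by lra.
  apply (boundary_neq0 z Hz).
  replace z with (pscale (/ det u v) (pscale (det u v) z)) by (pt_ext; field; lra).
  rewrite Dz. pt_ext; ring.
Qed.

Lemma arcpt_pconv (t : nat -> R) t0 : (forall n, 0 <= t n <= 1) -> 0 <= t0 <= 1 ->
  Un_cv t t0 -> pconv (fun n => arcpt (t n)) (arcpt t0).
Proof.
  intros Ht Ht0 Hcv. apply pconv_of_pdist. intros eps He.
  destruct (arcpt_continuous t0 Ht0 eps He) as (d & Hd & Hc).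
  destruct (Hcv d Hd) as (N & HN). exists N. intros n Hn. apply Hc; auto. apply HN, Hn.
Qed.

End Arcs.

Lemma boundary_approach_ccw x y : Sb x -> Sb y -> 0 < det x y ->
  exists z, (forall n, Sb (z n) /\ 0 < det x (z n)) /\ pconv z x.
Proof.
  intros Hx Hy Hxy. exists (fun n => arcpt x y (/ (INR n + 2))).
  assert (Ht : forall n, 0 <= / (INR n + 2) <= 1) 
    by (intros n; pose proof (inv_INR2_bounds n); lra).
  split.
  - intros n. pose proof (inv_INR2_bounds n). split; [apply arcpt_boundary; auto|].
    rewrite det_arcpt_l by auto. apply Rdiv_lt_0_compat; [nra|apply knorm_segpt_pos; auto].
  - pose proof (arcpt_pconv x y Hxy _ 0 Ht ltac:(lra) Un_cv_inv_INR2) as H.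
    rewrite arcpt_0 in H; auto.
Qed.

Lemma boundary_approach_cw u x : Sb u -> Sb x -> 0 < det u x ->
  exists z, (forall n, Sb (z n) /\ 0 < det (z n) x) /\ pconv z x.
Proof.
  intros Hu Hx Hux. exists (fun n => arcpt u x (1 - / (INR n + 2))).
  assert (Ht : forall n, 0 <= 1 - / (INR n + 2) <= 1) 
    by (intros n; pose proof (inv_INR2_bounds n); lra).
  split.
  - intros n. pose proof (inv_INR2_bounds n). split; [apply arcpt_boundary; auto|].
    rewrite det_arcpt_r by auto. apply Rdiv_lt_0_compat; [nra|apply knorm_segpt_pos; auto].
  - assert (Hcv : Un_cv (fun n => 1 - / (INR n + 2)) 1).
    { pose proof (CV_minus _ _ _ _ (Un_cv_const 1) Un_cv_inv_INR2) as H.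
      rewrite Rminus_0_r in H. exact H. }
    pose proof (arcpt_pconv u x Hux _ 1 Ht ltac:(lra) Hcv) as H.
    rewrite arcpt_1 in H; auto.
Qed.

(** * Measures of arcs under a B-measure *)

Section BMeasure.
Variable mu : pset -> R.
Hypothesis HB : B_measure K mu.

Local Notation BS := (borel_in Sb).

Let Hmu : finite_borel_measure_on Sb mu.
Proof. apply HB. Qed.

Let measure_total : mu Sb = 2 * PI.
Proof. apply HB. Qed.

Let measure_popp X : BS X -> mu X = mu (fun z => X (popp z)).
Proof. apply HB. Qed.

Let measure_point x : Sb x -> mu (fun z => z = x) = 0.
Proof. apply HB. Qed.

Lemma BS_restrict P : borel P -> BS (fun z => Sb z /\ P z).
Proof.
  intros H. split; [|intros z []; auto].
  apply borel_inter; auto. apply borel_closed, boundary_closed.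
Qed.

Lemma BS_Arc u v : BS (Arc u v).
Proof.
  apply (BS_restrict (fun z => 0 <= det u z /\ 0 <= det z v)).
  apply borel_inter; [apply borel_detl_nonneg|apply borel_detr_nonneg].
Qed.

Lemma BS_Arc_open_start u v : BS (fun z => Sb z /\ 0 < det u z /\ 0 <= det z v).
Proof.
  apply (BS_restrict (fun z => 0 < det u z /\ 0 <= det z v)).
  apply borel_inter; [apply borel_detl_pos|apply borel_detr_nonneg].
Qed.

Lemma BS_line x : BS (fun z => Sb z /\ det x z = 0).
Proof.
  apply BS_restrict. apply (borel_ext (fun z => 0 <= det x z /\ 0 <= det z x)).
  - apply borel_inter; [apply borel_detl_nonneg|apply borel_detr_nonneg].
  - intros z. rewrite (det_swap x z). lra.
Qed.

Lemma measure_line x : Sb x -> mu (fun z => Sb z /\ det x z = 0) = 0.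
Proof.
  intros Hx. assert (Hx' : Sb (popp x)) by (apply boundary_opp; auto).
  assert (Hpt : forall p, Sb p -> BS (fun z => z = p))
    by (intros p Hp; split; [apply borel_singleton|intros z ->; auto]).
  apply Rle_antisym; [|apply (measure_nonneg Hmu), BS_line].
  eapply Rle_trans.
  - apply (measure_mono Hmu _ (fun z => z = x \/ z = popp x)).
    + apply BS_line.
    + apply borel_in_union2; auto.
    + intros z [Hz Hd]. destruct (boundary_det0 x z Hx Hz Hd); auto.
  - eapply Rle_trans; [apply (measure_subadd Hmu); auto|].
    rewrite !measure_point; auto. lra.
Qed.

(* Antipodal symmetry gives the two closed half-boundaries equal measure, and they
   overlap only in the null set [{x, -x}]. *)
Lemma measure_halfplane x : Sb x -> mu (fun z => Sb z /\ 0 <= det x z) = PI.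
Proof.
  intros Hx.
  set (P := fun z => Sb z /\ 0 <= det x z).
  set (Q := fun z => Sb z /\ det x z < 0).
  assert (BP : BS P) by apply BS_restrict, borel_detl_nonneg.
  assert (BQ : BS Q) by apply BS_restrict, borel_detl_neg.
  assert (Etot : mu Sb = mu P + mu Q).
  { rewrite <- (measure_union2 Hmu); auto; [|intros z [] []; lra].
    apply measure_ext. intros z; unfold P, Q. split; [|intros [[]|[]]; auto].
    intros Hz. destruct (Rle_or_lt 0 (det x z)); auto. }
  assert (Esym : mu P = mu (fun z => Sb z /\ 0 <= det z x)).
  { rewrite (measure_popp P BP). apply measure_ext. intros z; unfold P.
    rewrite boundary_opp, det_oppr, (det_swap z x). split; intros [? ?]; split; auto; lra. }
  assert (Hle : mu (fun z => Sb z /\ 0 <= det z x) <= mu Q).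
  { pose proof (measure_subadd Hmu _ _ BQ (BS_line x)) as H.
    rewrite (measure_line x Hx), Rplus_0_r in H. eapply Rle_trans; [|exact H].
    apply (measure_mono Hmu).
    - apply BS_restrict, borel_detr_nonneg.
    - apply borel_in_union2; [apply BQ|apply BS_line].
    - intros z [Hz Hd]. rewrite det_swap in Hd.
      destruct (Rle_lt_or_eq_dec 0 (- det x z) Hd); [left|right]; unfold Q; split; auto; lra. }
  assert (Hge : mu Q <= mu (fun z => Sb z /\ 0 <= det z x)).
  { apply (measure_mono Hmu); auto; [apply BS_restrict, borel_detr_nonneg|].
    intros z [Hz Hd]. split; auto. rewrite det_swap. lra. }
  pose proof measure_total. fold P. lra.
Qed.

Lemma measure_Arc_birkhoff u v : Sb u -> Sb v -> 0 < det u v ->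
  birkhoff K u v \/ birkhoff K v u -> mu (Arc u v) = PI / 2.
Proof.
  intros Hu Hv Huv Hb. destruct HB as (_ & HBa).
  assert (Hanti : forall z, arc_set (arcpt u v) z -> ~ arc_set (arcpt u v) (popp z)).
  { rewrite arc_set_arcpt by auto. intros z H1 H2. exact (Arc_no_antipodal u v Huv z H1 H2). }
  rewrite <- (arc_set_arcpt u v) by auto.
  destruct Hb as [Hb|Hb].
  - apply (HBa _ u v); auto. apply arc_param_arcpt; auto.
  - rewrite <- arc_set_rev. apply (HBa _ v u); [apply arc_param_rev, arc_param_arcpt; auto| |auto].
    rewrite arc_set_rev. auto.
Qed.

Lemma measure_Arc_open_start u v : Sb u ->
  mu (Arc u v) <= mu (fun z => Sb z /\ 0 < det u z /\ 0 <= det z v).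
Proof.
  intros Hu. pose proof (BS_Arc_open_start u v) as B1.
  pose proof (measure_subadd Hmu _ _ B1 (BS_line u)) as H.
  rewrite (measure_line u Hu), Rplus_0_r in H. eapply Rle_trans; [|exact H].
  apply (measure_mono Hmu); [apply BS_Arc|apply borel_in_union2; [apply B1|apply BS_line]|].
  intros z (Hz & H1 & H2). destruct (Rle_lt_or_eq_dec _ _ H1); [left|right]; auto.
Qed.

Lemma measure_Arc_opp a b : mu (Arc (popp a) (popp b)) = mu (Arc a b).
Proof.
  rewrite (measure_popp _ (BS_Arc _ _)). apply measure_ext. intros z. unfold Arc.
  rewrite boundary_opp, !det_oppr, !det_oppl, !Ropp_involutive. tauto.
Qed.

Lemma not_support_of_null x a b A : support K mu x -> cone a b x -> BS A -> mu A = 0 ->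
  (forall z, cone a b z -> Sb z -> A z) -> False.
Proof.
  intros (_ & Hs) Hx HA HmA Hsub. specialize (Hs _ (open_cone a b) Hx).
  assert (mu (fun z => cone a b z /\ Sb z) <= mu A); [|lra].
  apply (measure_mono Hmu); auto; [|intros z []; auto].
  split; [apply borel_inter; [apply borel_open, open_cone|apply borel_closed, boundary_closed]|].
  intros z []; auto.
Qed.

(** * Support points do not lie on boundary segments *)

Lemma measure_cone_null z1 z2 y : 0 < det z1 z2 -> 0 <= det z1 y -> 0 < det z2 y ->
  mu (Arc z1 y) = mu (Arc z2 y) -> mu (fun z => Sb z /\ cone z1 z2 z) = 0.
Proof.
  intros D12 D1 D2 Heq.
  assert (Hsub : forall z, Arc z2 y z -> Arc z1 y z).
  { intros z (Hz & H1 & H2). split; [auto|split; auto].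
    pose proof (det_expand z1 z2 y z). apply Rmult_le_reg_l with (det z2 y); nra. }
  assert (Hdiff : mu (fun z => Arc z1 y z /\ ~ Arc z2 y z) = 0).
  { pose proof (measure_union2_diff Hmu _ _ (BS_Arc z2 y) (BS_Arc z1 y)) as E.
    rewrite (measure_ext (fun z => Arc z2 y z \/ Arc z1 y z) (Arc z1 y)) in E
      by (intros z; split; [intros [|]|]; auto). lra. }
  assert (BC : BS (fun z => Sb z /\ cone z1 z2 z)) by apply BS_restrict, borel_open, open_cone.
  apply Rle_antisym; [|apply (measure_nonneg Hmu), BC].
  rewrite <- Hdiff.
  apply (measure_mono Hmu); auto; [apply borel_in_diff; [apply BS_Arc|apply BS_Arc]|].
  intros z (Hz & H1 & H2). split.
  - split; [auto|split; [lra|]].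
    pose proof (det_expand y z1 z2 z).
    rewrite (det_swap z1 y), (det_swap z2 y), (det_swap z y) in *. nra.
  - intros (_ & H3 & _). rewrite det_swap in H2. lra.
Qed.

Lemma segment_not_support a b s0 : a <> b -> (forall s, 0 < s < 1 -> Sb (segpt a b s)) ->
  0 < s0 < 1 -> 0 < det a b -> ~ support K mu (segpt a b s0).
Proof.
  intros Hab Hs Hs0 Dab Hsup.
  pose proof (segment_dir_neq0 a b Hab) as Hd0.
  pose proof (knorm_pos _ Hd0) as HNd.
  set (y := pscale (/ knorm (padd b (popp a))) (padd b (popp a))).
  assert (Dy : forall s, det (segpt a b s) y = det a b / knorm (padd b (popp a)))
    by (intros s; unfold y; rewrite det_scaler, det_segpt_dir; field; lra).
  assert (Dy_pos : forall s, 0 < det (segpt a b s) y)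
    by (intros; rewrite Dy; apply Rdiv_lt_0_compat; auto).
  assert (Harc : forall s, 0 < s < 1 -> mu (Arc (segpt a b s) y) = PI / 2).
  { intros s Hs1. apply measure_Arc_birkhoff; auto; [apply boundary_normalize; auto|].
    left. apply birkhoff_scaler; [apply segment_birkhoff; auto|apply Rinv_neq_0_compat; lra]. }
  set (s1 := s0 / 2). set (s2 := (1 + s0) / 2).
  apply (not_support_of_null _ (segpt a b s1) (segpt a b s2)
    (fun z => Sb z /\ cone (segpt a b s1) (segpt a b s2) z) Hsup).
  - unfold cone. rewrite !det_segpt. unfold s1, s2. split; apply Rmult_lt_0_compat; lra.
  - apply BS_restrict, borel_open, open_cone.
  - apply (measure_cone_null _ _ y); [|left; auto|auto|].
    + rewrite det_segpt. unfold s1, s2. apply Rmult_lt_0_compat; lra.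
    + rewrite !Harc by (unfold s1, s2; lra). reflexivity.
  - auto.
Qed.

Lemma support_not_E x : support K mu x -> ~ E_set K x.
Proof.
  intros Hsup (a & b & Hab & Hs & s0 & Hs0 & Hx).
  change (forall s, 0 < s < 1 -> Sb (segpt a b s)) in Hs. change (x = segpt a b s0) in Hx. subst x.
  destruct (Rtotal_order (det a b) 0) as [Hn|[Hz|Hp]].
  - assert (Hrev : forall s, segpt b a s = segpt a b (1 - s))
      by (intros; unfold segpt; pt_ext; ring).
    apply (segment_not_support b a (1 - s0)).
    + auto.
    + intros s Hs1. rewrite Hrev. apply Hs; lra.
    + lra.
    + rewrite det_swap; lra.
    + rewrite Hrev. replace (1 - (1 - s0)) with s0 by ring. auto.
  - (* an open boundary segment cannot lie on a line through the origin *)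
    pose proof (segment_dir_neq0 a b Hab) as Hd0.
    set (d := padd b (popp a)) in Hd0 |- *.
    apply (birkhoff_det_neq0 (segpt a b s0) (pscale (/ knorm d) d)).
    + apply Hs; auto.
    + apply boundary_normalize; auto.
    + apply birkhoff_scaler; [apply segment_birkhoff; auto|].
      apply Rinv_neq_0_compat, Rgt_not_eq, knorm_pos, Hd0.
    + pose proof (knorm_pos d Hd0).
      unfold d. rewrite det_scaler, det_segpt_dir, Hz. ring.
  - apply (segment_not_support a b s0); auto.
Qed.

(** * Support points are Auerbach points *)

(* The arcs [x, y], (y, w] and (w, -x] fill the half-boundary from [x] to [-x], of measure [PI];
   the first two already have measure [PI / 2] each. *)
Lemma chain_null_left x y w : chain x y w -> 0 < det x w -> mu (Arc (popp w) x) = 0.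
Proof.
  intros (Hx & Hy & Hw & Bxy & Byw & Dxy & Dyw) Dxw.
  set (A1 := Arc x y).
  set (A2 := fun z => Sb z /\ 0 < det y z /\ 0 <= det z w).
  set (A3 := fun z => Sb z /\ 0 < det w z /\ 0 <= det z (popp x)).
  assert (B1 : BS A1) by apply BS_Arc.
  assert (B2 : BS A2) by apply BS_Arc_open_start.
  assert (B3 : BS A3) by apply BS_Arc_open_start.
  assert (M1 : mu A1 = PI / 2) by (apply measure_Arc_birkhoff; auto).
  assert (M2 : PI / 2 <= mu A2)
    by (rewrite <- (measure_Arc_birkhoff y w); auto; apply measure_Arc_open_start; auto).
  assert (Hsum : mu (fun z => A1 z \/ (A2 z \/ A3 z)) = mu A1 + (mu A2 + mu A3)).
  { rewrite (measure_union2 Hmu); [|auto|apply borel_in_union2; auto|].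
    - rewrite (measure_union2 Hmu); auto.
      intros z (_ & _ & H1) (_ & H2 & _). rewrite det_swap in H1. lra.
    - intros z (_ & H1 & H2) [(_ & H3 & _)|(_ & H3 & _)].
      + rewrite det_swap in H2. lra.
      + pose proof (det_expand w x y z). rewrite (det_swap x w), (det_swap y w) in *. nra. }
  assert (Hle : mu (fun z => A1 z \/ (A2 z \/ A3 z)) <= PI).
  { rewrite <- (measure_halfplane x Hx). apply (measure_mono Hmu).
    - apply borel_in_union2; [|apply borel_in_union2]; auto.
    - apply BS_restrict, borel_detl_nonneg.
    - intros z [(Hz & H1 & H2)|[(Hz & H1 & H2)|(Hz & H1 & H2)]]; split; auto.
      + pose proof (det_expand x y w z). nra.
      + rewrite det_oppr, det_swap in H2. lra. }
  assert (M3 : mu (Arc w (popp x)) <= 0)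
    by (eapply Rle_trans; [apply measure_Arc_open_start; auto|fold A3; lra]).
  rewrite <- (popp_involutive x), measure_Arc_opp.
  apply Rle_antisym; auto. apply (measure_nonneg Hmu), BS_Arc.
Qed.

(* Here the arcs [x, y] and [y, w] cover both the half-boundary from [x] to [-x] and the part
   from [-x] to [w]. *)
Lemma chain_null_right x y w : chain x y w -> det x w < 0 -> mu (Arc x (popp w)) = 0.
Proof.
  intros (Hx & Hy & Hw & Bxy & Byw & Dxy & Dyw) Dxw.
  set (P := fun z => Sb z /\ 0 <= det x z).
  set (Q := fun z => Sb z /\ det x z < 0 /\ 0 <= det z w).
  assert (BQ : BS Q)
    by (apply (BS_restrict (fun z => _ /\ _)), borel_inter;
        [apply borel_detl_neg|apply borel_detr_nonneg]).
  assert (BP : BS P) by apply BS_restrict, borel_detl_nonneg.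
  assert (Hle : mu (fun z => P z \/ Q z) <= mu (fun z => Arc x y z \/ Arc y w z)).
  { apply (measure_mono Hmu); [apply borel_in_union2; auto|apply borel_in_union2; apply BS_Arc|].
    intros z [(Hz & H1)|(Hz & H1 & H2)].
    - destruct (Rle_or_lt 0 (det z y)); [left; split; auto|right; split; [auto|split]].
      + rewrite det_swap. lra.
      + pose proof (det_expand z x y w). rewrite (det_swap y w), (det_swap x z) in *. nra.
    - right. split; [auto|split; auto].
      pose proof (det_expand y x w z). rewrite (det_swap x y) in *. nra. }
  rewrite (measure_union2 Hmu) in Hle; auto; [|intros z (_ & H1) (_ & H2 & _); lra].
  pose proof (measure_subadd Hmu _ _ (BS_Arc x y) (BS_Arc y w)) as Hsub.
  pose proof (measure_halfplane x Hx) as Hhalf. fold P in Hhalf.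
  rewrite (measure_Arc_birkhoff x y), (measure_Arc_birkhoff y w) in Hsub by auto.
  assert (MQ : mu Q <= 0) by lra.
  assert (M : mu (Arc (popp x) w) <= mu Q).
  { pose proof (measure_subadd Hmu _ _ BQ (BS_line x)) as H.
    rewrite (measure_line x Hx), Rplus_0_r in H. eapply Rle_trans; [|exact H].
    apply (measure_mono Hmu); [apply BS_Arc|apply borel_in_union2; [apply BQ|apply BS_line]|].
    intros z (Hz & H1 & H2). rewrite det_oppl in H1.
    destruct (Rle_lt_or_eq_dec 0 (- det x z) H1);
      [left; split; [auto|split; [lra|auto]]|right; split; [auto|lra]]. }
  rewrite <- (popp_involutive x), measure_Arc_opp.
  apply Rle_antisym; [lra|]. apply (measure_nonneg Hmu), BS_Arc.
Qed.

Lemma support_not_in_null_arc x a b : support K mu x -> cone a b x -> mu (Arc a b) = 0 -> False.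
Proof.
  intros Hsup Hx HA. apply (not_support_of_null x a b (Arc a b)); auto; [apply BS_Arc|].
  intros z (H1 & H2) Hz. split; [auto|split; lra].
Qed.

(* The null arcs on the two sides of [x] would cover a neighbourhood of [x]. *)
Lemma support_chains_same_sign x y w y' w' : support K mu x -> chain x y w -> chain x y' w' ->
  0 < det x w -> ~ det x w' < 0.
Proof.
  intros Hsup C1 C2 D1 D2.
  pose proof (chain_null_left x y w C1 D1) as M1. pose proof (chain_null_right x y' w' C2 D2) as M2.
  assert (BU : BS (fun z => Arc (popp w) x z \/ Arc x (popp w') z))
    by (apply borel_in_union2; apply BS_Arc).
  assert (Hx : cone (popp w) (popp w') x)
    by (split; [rewrite det_oppl, (det_swap x w)|rewrite det_oppr]; lra).
  apply (not_support_of_null x (popp w) (popp w') _ Hsup Hx BU).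
  - apply Rle_antisym; [|apply (measure_nonneg Hmu), BU].
    pose proof (measure_subadd Hmu _ _ (BS_Arc (popp w) x) (BS_Arc x (popp w'))). lra.
  - intros z (H1 & H2) Hz. destruct (Rle_or_lt 0 (det z x)) as [H3|H3].
    + left. split; [auto|split; lra].
    + right. split; [auto|split; [rewrite det_swap|]; lra].
Qed.

(* Approaching [x] from the side opposite to the null arc [(-w, x)]: the chains from the
   approximating points have null arcs [(-W, z)] on their own side, and by continuity these
   eventually reach over [x]. *)
Lemma support_chains_not_all_ccw x y : support K mu x -> Sb y -> 0 < det x y ->
  ~ (forall y' w, chain x y' w -> 0 < det x w).
Proof.
  intros Hsup Hy Dxy Hall. assert (Hx : Sb x) by apply Hsup.
  destruct (boundary_approach_ccw x y Hx Hy Dxy) as (z & Hz & Hzc).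
  destruct (chain_limit_near z x Hzc (fun n => proj1 (Hz n))) as (Yl & Wl & Cl & Hnear).
  pose proof (Hall _ _ Cl) as Hl.
  destruct (Hnear (det x Wl) Hl) as (n & Y & W & C & H1 & H2). apply Rabs_def2 in H1, H2.
  apply (support_not_in_null_arc x (popp W) (z n) Hsup).
  - split; [rewrite det_oppl, det_swap|apply Hz]; lra.
  - apply (chain_null_left (z n) Y W C). lra.
Qed.

Lemma support_chains_not_all_cw x y : support K mu x -> Sb y -> 0 < det x y ->
  ~ (forall y' w, chain x y' w -> det x w < 0).
Proof.
  intros Hsup Hy Dxy Hall. assert (Hx : Sb x) by apply Hsup.
  destruct (boundary_approach_cw (popp y) x) as (z & Hz & Hzc);
    [apply boundary_opp; auto|auto|rewrite det_oppl, det_swap; lra|].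
  destruct (chain_limit_near z x Hzc (fun n => proj1 (Hz n))) as (Yl & Wl & Cl & Hnear).
  pose proof (Hall _ _ Cl) as Hl.
  destruct (Hnear (- det x Wl) ltac:(lra)) as (n & Y & W & C & H1 & H2). apply Rabs_def2 in H1, H2.
  apply (support_not_in_null_arc x (z n) (popp W) Hsup).
  - split; [apply Hz|rewrite det_oppr; lra].
  - apply (chain_null_right (z n) Y W C). lra.
Qed.

Lemma support_auerbach x : support K mu x -> auerbach K x.
Proof.
  intros Hsup. apply NNPP. intros HnA.
  assert (Hx : Sb x) by apply Hsup.
  destruct (chain_exists x Hx) as (y0 & w0 & C0).
  pose proof C0 as (_ & Hy0 & _ & _ & _ & Dxy0 & _).
  destruct (Rtotal_order (det x w0) 0) as [Hn|[Hz|Hp]].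
  - apply (support_chains_not_all_cw x y0 Hsup Hy0 Dxy0). intros y w C.
    destruct (Rtotal_order (det x w) 0) as [|[Hw|Hw]]; auto.
    + exfalso. apply (chain_det_neq0 x y w C HnA Hw).
    + exfalso. apply (support_chains_same_sign x y w y0 w0 Hsup C C0 Hw Hn).
  - apply (chain_det_neq0 x y0 w0 C0 HnA Hz).
  - apply (support_chains_not_all_ccw x y0 Hsup Hy0 Dxy0). intros y w C.
    destruct (Rtotal_order (det x w) 0) as [Hw|[Hw|]]; auto.
    + exfalso. apply (support_chains_same_sign x y0 w0 y w Hsup C0 C Hp Hw).
    + exfalso. apply (chain_det_neq0 x y w C HnA Hw).
Qed.

End BMeasure.
End ConvexBody.

Theorem lemma2p1 (K : pset) (mu : pset -> R) :
  sym_convex_body K -> B_measure K mu ->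
  forall x, support K mu x -> auerbach K x /\ ~ E_set K x.
Proof.
  intros HK HB x Hx. split.
  - exact (support_auerbach K HK mu HB x Hx).
  - exact (support_not_E K HK mu HB x Hx).
Qed.
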